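(* For every hyperstonean locale $H$, the Boolean algebra $\mathrm{COpen}(H)$ of compact opens of $H$ is a localizable Boolean algebra, and for every localizable Boolean algebra $A$, the frame $\mathrm{Idl}(A)$ of ideals of $A$ is a hyperstonean locale. The adjoint equivalence between Stonean locales (with open maps) and the opposite of complete Boolean algebras (with supremum-preserving homomorphisms), given by $\mathrm{COpen}$ and $\mathrm{Ideal}$, restricts to an adjoint equivalence $\mathsf{HStoneanLoc}\simeq\mathsf{LBAlg}^{\mathrm{op}}=\mathsf{MLoc}$.
   Context: Frames, locales: a frame is a poset with finite meets and arbitrary joins, binary meets distributing over joins; locales are the opposite category; a locale map $f$ has frame homomorphism $f^*$. $x\to y=\sup\{w:w\wedge x\le y\}$, $\neg x=x\to0$. A locale map is open if $f^*$ preserves arbitrary meets and Heyting implications. Compact open $a$: $\bigvee S\ge a$ implies $\bigvee F\ge a$ for some finite $F\subset S$. Coherent: compact opens closed under finite meets (including top) and generate under joins; regular: $y=\bigvee\{x:\neg x\vee y=1\}$; extremally disconnected: $\neg x\vee\neg\neg x=1$. Stonean locale: coherent, regular, extremally disconnected. A continuous valuation $\nu:L\to[0,\infty)$: $\nu(0)=0$, modular, monotone, preserving directed suprema; normal if $\nu(\neg\neg a)=\nu(a)$. A hyperstonean locale is a Stonean locale such that for each $a\neq0$ there is a normal valuation $\nu$ with $\nu(a)\ne0$; $\mathsf{HStoneanLoc}$ has open locale maps as morphisms. A Boolean algebra $A$ is localizable if complete and $1$ is the supremum of all $a$ for which $\{b\le a\}$ admits a faithful continuous valuation; $\mathsf{LBAlg}$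 has supremum-preserving Boolean homomorphisms as morphisms. An ideal of a distributive lattice is a down-closed subset closed under finite joins; $\mathrm{Ideal}(A)$ is the locale whose frame is the set of ideals of $A$ ordered by inclusion. The unit $H\to\mathrm{Ideal}(\mathrm{COpen}(H))$ sends an ideal to its join, and $a\in A$ corresponds to its principal ideal. *)

(* Everything is stated order-theoretically: a frame / Boolean
   algebra is a carrier type T together with its partial order le, and all
   lattice operations are expressed through (unique) least upper bounds /
   greatest lower bounds. *)
From Stdlib Require Import Reals List.
Open Scope R_scope.

Section Order.
Context {T : Type} (le : T -> T -> Prop).

Definition is_poset : Prop :=
  (forall x, le x x) /\ (forall x y z, le x y -> le y z -> le x z) /\
  (forall x y, le x y -> le y x -> x = y).

Definition upper (S : T -> Prop) (u : T) : Prop := forall x, S x -> le x u.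
Definition lower (S : T -> Prop) (l : T) : Prop := forall x, S x -> le l x.
Definition lub (S : T -> Prop) (u : T) : Prop :=
  upper S u /\ forall v, upper S v -> le u v.
Definition glb (S : T -> Prop) (l : T) : Prop :=
  lower S l /\ forall v, lower S v -> le v l.

Definition pair (x y : T) : T -> Prop := fun z => z = x \/ z = y.
Definition is_join (x y j : T) : Prop := lub (pair x y) j.
Definition is_meet (x y m : T) : Prop := glb (pair x y) m.
Definition is_top (t : T) : Prop := forall x, le x t.
Definition is_bot (b : T) : Prop := forall x, le b x.

Definition is_frame : Prop :=
  is_poset /\ (forall S, exists u, lub S u) /\ (forall x y, exists m, is_meet x y m) /\
  (forall x S s m, lub S s -> is_meet x s m ->
     lub (fun y => exists t, S t /\ is_meet x t y) m).

Definition is_imp (x y i : T) : Prop :=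
  lub (fun w => forall m, is_meet w x m -> le m y) i.
Definition is_neg (x n : T) : Prop := forall b, is_bot b -> is_imp x b n.

Definition compact (a : T) : Prop :=
  forall S u, lub S u -> le a u ->
  exists l : list T, (forall x, In x l -> S x) /\
     exists v, lub (fun x => In x l) v /\ le a v.

Definition coherent : Prop :=
  (forall a b m, compact a -> compact b -> is_meet a b m -> compact m) /\
  (forall t, is_top t -> compact t) /\
  (forall x, lub (fun c => compact c /\ le c x) x).

Definition regular : Prop :=
  forall y, lub (fun x => exists n, is_neg x n /\ forall t, is_top t -> is_join n y t) y.

Definition extremally_disconnected : Prop :=
  forall x n nn t, is_neg x n -> is_neg n nn -> is_top t -> is_join n nn t.

Definition stonean : Prop :=
  is_frame /\ coherent /\ regular /\ extremally_disconnected.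

Definition directed (S : T -> Prop) : Prop :=
  (exists s, S s) /\ forall a b, S a -> S b -> exists c, S c /\ le a c /\ le b c.

Definition continuous_valuation (nu : T -> R) : Prop :=
  (forall x, 0 <= nu x) /\
  (forall b, is_bot b -> nu b = 0) /\
  (forall x y j m, is_join x y j -> is_meet x y m -> nu j + nu m = nu x + nu y) /\
  (forall x y, le x y -> nu x <= nu y) /\
  (forall S u, directed S -> lub S u ->
     Raxioms.is_lub (fun r => exists s, S s /\ r = nu s) (nu u)).

Definition normal_valuation (nu : T -> R) : Prop :=
  forall a n nn, is_neg a n -> is_neg n nn -> nu nn = nu a.

Definition hyperstonean : Prop :=
  stonean /\
  forall a, ~ is_bot a ->
    exists nu, continuous_valuation nu /\ normal_valuation nu /\ nu a <> 0.

Definition is_cba : Prop :=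
  is_poset /\ (forall S, exists u, lub S u) /\
  (forall x y, exists m, is_meet x y m) /\
  (forall x y z j m a b r, is_join y z j -> is_meet x j m -> is_meet x y a ->
      is_meet x z b -> is_join a b r -> m = r) /\
  (forall x, exists c, (forall t, is_top t -> is_join x c t) /\
                       (forall b, is_bot b -> is_meet x c b)).

(* a faithful continuous valuation on the principal downset {b <= a}
   (joins, meets, bottom and suprema there are those of the ambient algebra) *)
Definition faithful_cv_below (a : T) (nu : T -> R) : Prop :=
  (forall x, le x a -> 0 <= nu x) /\
  (forall b, is_bot b -> nu b = 0) /\
  (forall x y j m, le x a -> le y a -> is_join x y j -> is_meet x y m ->
      nu j + nu m = nu x + nu y) /\
  (forall x y, le x a -> le y a -> le x y -> nu x <= nu y) /\
  (forall S u, (forall s, S s -> le s a) -> directed S -> lub S u ->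
     Raxioms.is_lub (fun r => exists s, S s /\ r = nu s) (nu u)) /\
  (forall b, le b a -> nu b = 0 -> is_bot b).

Definition localizable : Prop :=
  is_cba /\
  forall t, is_top t -> lub (fun a => exists nu, faithful_cv_below a nu) t.

Definition is_ideal (I : T -> Prop) : Prop :=
  (forall x y, le x y -> I y -> I x) /\
  (forall b, is_bot b -> I b) /\
  (forall x y j, I x -> I y -> is_join x y j -> I j).

End Order.

Definition copen_t {T : Type} (le : T -> T -> Prop) : Type := {x : T | compact le x}.
Definition copen_le {T : Type} (le : T -> T -> Prop) (x y : copen_t le) : Prop :=
  le (proj1_sig x) (proj1_sig y).

Definition ideal_t {T : Type} (le : T -> T -> Prop) : Type := {I : T -> Prop | is_ideal le I}.
Definition ideal_le {T : Type} (le : T -> T -> Prop) (I J : ideal_t le) : Prop :=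
  forall x, proj1_sig I x -> proj1_sig J x.

Definition image {A B : Type} (f : A -> B) (S : A -> Prop) : B -> Prop :=
  fun y => exists x, S x /\ y = f x.

Definition frame_hom {A B : Type} (leA : A -> A -> Prop) (leB : B -> B -> Prop)
  (f : A -> B) : Prop :=
  (forall S u, lub leA S u -> lub leB (image f S) (f u)) /\
  (forall x y m, is_meet leA x y m -> is_meet leB (f x) (f y) (f m)) /\
  (forall t, is_top leA t -> is_top leB (f t)).

(* f is the frame homomorphism f^* of an open locale map: it moreover
   preserves arbitrary meets and Heyting implications *)
Definition open_frame_hom {A B : Type} (leA : A -> A -> Prop) (leB : B -> B -> Prop)
  (f : A -> B) : Prop :=
  frame_hom leA leB f /\
  (forall S l, glb leA S l -> glb leB (image f S) (f l)) /\
  (forall x y i, is_imp leA x y i -> is_imp leB (f x) (f y) (f i)).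

Definition sup_bool_hom {A B : Type} (leA : A -> A -> Prop) (leB : B -> B -> Prop)
  (g : A -> B) : Prop :=
  (forall S u, lub leA S u -> lub leB (image g S) (g u)) /\
  (forall x y m, is_meet leA x y m -> is_meet leB (g x) (g y) (g m)) /\
  (forall t, is_top leA t -> is_top leB (g t)) /\
  (forall x c, (forall t, is_top leA t -> is_join leA x c t) ->
               (forall b, is_bot leA b -> is_meet leA x c b) ->
               (forall t, is_top leB t -> is_join leB (g x) (g c) t) /\
               (forall b, is_bot leB b -> is_meet leB (g x) (g c) b)).

Definition order_iso {A B : Type} (leA : A -> A -> Prop) (leB : B -> B -> Prop)
  (f : A -> B) : Prop :=
  (forall y, exists x, f x = y) /\ (forall x y, f x = f y -> x = y) /\
  (forall x y, leA x y <-> leB (f x) (f y)).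

From Stdlib Require Import List Reals Lra Classical ClassicalEpsilon
  FunctionalExtensionality PropExtensionality ProofIrrelevance.

(** In a Stonean frame the compact elements are exactly the complemented ones: by regularity
    a compact [a] is covered by finitely many [x] with [neg x \/ a = top], and compactness of
    [top] gives the converse.  Hence they form a complete Boolean algebra, with suprema
    [neg (neg (sup _))].  For localizability, let [nu] be a normal valuation with
    [nu (neg v) <> 0].  The [nu]-null elements have a largest member [n], which is regular by
    normality, and [nu] is faithful on the compact opens below [neg n]; so if [v] bounds every
    compact open carrying a faithful valuation, then [neg v /\ neg n = bot], i.e.
    [neg v <= n], which is absurd.  Conversely, the ideals of a localizable algebra form a
    coherent frame whose compact elements are the principal ideals and in which
    [neg I = down (neg (sup I))]; a faithful valuation [mu] below [a] gives the normal
    valuation [I |-> mu (a /\ sup I)].  On morphisms, a supremum-preserving Boolean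
    homomorphism [g] has a left adjoint satisfying Frobenius reciprocity, which makes
    [I |-> down (g I)] preserve meets and implications. *)

Lemma pred_ext {A} (P Q : A -> Prop) : (forall x, P x <-> Q x) -> P = Q.
Proof.
  intros H; apply functional_extensionality; intros x.
  apply propositional_extensionality; auto.
Qed.

Lemma lub_unique {T} (le : T -> T -> Prop) :
  is_poset le -> forall S u v, lub le S u -> lub le S v -> u = v.
Proof. intros [_ [_ A]] S u v [Hu1 Hu2] [Hv1 Hv2]; apply A; auto. Qed.

Lemma glb_unique {T} (le : T -> T -> Prop) :
  is_poset le -> forall S u v, glb le S u -> glb le S v -> u = v.
Proof. intros [_ [_ A]] S u v [Hu1 Hu2] [Hv1 Hv2]; apply A; auto. Qed.

Lemma lub_iff_eq {T} (le : T -> T -> Prop) S e u :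
  is_poset le -> lub le S e -> (lub le S u <-> u = e).
Proof. intros P H; split; [intros; eapply lub_unique; eauto | intros ->; auto]. Qed.

Lemma glb_iff_eq {T} (le : T -> T -> Prop) S e u :
  is_poset le -> glb le S e -> (glb le S u <-> u = e).
Proof. intros P H; split; [intros; eapply glb_unique; eauto | intros ->; auto]. Qed.

Lemma image_pair {A B} (f : A -> B) x y : image f (pair x y) = pair (f x) (f y).
Proof.
  apply pred_ext; intros z; unfold image, pair; split.
  - intros [w [[-> | ->] ->]]; auto.
  - intros [-> | ->]; eauto.
Qed.

Lemma image_empty {A B} (f : A -> B) : image f (fun _ => False) = (fun _ => False).
Proof. apply pred_ext; intros z; unfold image; split; [intros [w [[] _]] | intros []]. Qed.

(** * Complete lattices *)

Class CompleteLattice {T : Type} (le : T -> T -> Prop) : Prop :=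
  complete_lattice : is_poset le /\ (forall S, exists u, lub le S u) /\
                     (forall x y, exists m, is_meet le x y m).

Class FrameDistributive {T : Type} (le : T -> T -> Prop) : Prop :=
  frame_distributive : forall x S s m, lub le S s -> is_meet le x s m ->
     lub le (fun y => exists t, S t /\ is_meet le x t y) m.

Lemma is_frame_complete_lattice {T} {le : T -> T -> Prop} : is_frame le -> CompleteLattice le.
Proof. intros [? [? [? ?]]]; split; auto. Qed.
Lemma is_frame_distributive {T} {le : T -> T -> Prop} : is_frame le -> FrameDistributive le.
Proof. intros [? [? [? ?]]]; auto. Qed.
Lemma is_frame_intro {T} {le : T -> T -> Prop} :
  CompleteLattice le -> FrameDistributive le -> is_frame le.
Proof. intros [? [? ?]] ?; split; [| split; [| split]]; auto. Qed.
Lemma is_cba_complete_lattice {T} {le : T -> T -> Prop} : is_cba le -> CompleteLattice le.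
Proof. intros [? [? [? ?]]]; split; auto. Qed.

Section CompleteLatticeTheory.
Context {T : Type} {le : T -> T -> Prop} {C : CompleteLattice le}.

Lemma cl_poset : is_poset le. Proof. apply C. Qed.
Lemma le_refl x : le x x. Proof. apply cl_poset. Qed.
Lemma le_trans x y z : le x y -> le y z -> le x z. Proof. apply cl_poset. Qed.
Lemma le_antisym x y : le x y -> le y x -> x = y. Proof. apply cl_poset. Qed.

Definition sup (S : T -> Prop) : T :=
  proj1_sig (constructive_indefinite_description _ (proj1 (proj2 C) S)).

Lemma sup_spec S : lub le S (sup S).
Proof. unfold sup; destruct constructive_indefinite_description; auto. Qed.
Lemma sup_ub S x : S x -> le x (sup S).
Proof. intros; apply (proj1 (sup_spec S)); auto. Qed.
Lemma sup_least S v : (forall x, S x -> le x v) -> le (sup S) v.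
Proof. intros; apply (proj2 (sup_spec S)); auto. Qed.
Lemma lub_eq_sup S u : lub le S u -> u = sup S.
Proof. intros; eapply lub_unique; [apply cl_poset | eassumption | apply sup_spec]. Qed.
Lemma sup_mono (S S' : T -> Prop) : (forall x, S x -> S' x) -> le (sup S) (sup S').
Proof. intros; apply sup_least; intros; apply sup_ub; auto. Qed.

Definition meet (x y : T) : T :=
  proj1_sig (constructive_indefinite_description _ (proj2 (proj2 C) x y)).

Lemma meet_spec x y : is_meet le x y (meet x y).
Proof. unfold meet; destruct constructive_indefinite_description; auto. Qed.
Lemma meet_le_l x y : le (meet x y) x. Proof. apply (proj1 (meet_spec x y)); left; auto. Qed.
Lemma meet_le_r x y : le (meet x y) y. Proof. apply (proj1 (meet_spec x y)); right; auto. Qed.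
Lemma meet_glb x y z : le z x -> le z y -> le z (meet x y).
Proof. intros; apply (proj2 (meet_spec x y)); intros w [-> | ->]; auto. Qed.
Lemma le_meet_iff x y z : le z (meet x y) <-> le z x /\ le z y.
Proof.
  split; [intros; split; eapply le_trans; eauto using meet_le_l, meet_le_r |].
  intros [? ?]; apply meet_glb; auto.
Qed.
Lemma is_meet_eq x y m : is_meet le x y m -> m = meet x y.
Proof. intros; eapply glb_unique; [apply cl_poset | eassumption | apply meet_spec]. Qed.

Definition join (x y : T) : T := sup (pair x y).

Lemma join_spec x y : is_join le x y (join x y). Proof. apply sup_spec. Qed.
Lemma join_le_l x y : le x (join x y). Proof. apply sup_ub; left; auto. Qed.
Lemma join_le_r x y : le y (join x y). Proof. apply sup_ub; right; auto. Qed.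
Lemma join_lub x y z : le x z -> le y z -> le (join x y) z.
Proof. intros; apply sup_least; intros w [-> | ->]; auto. Qed.
Lemma is_join_eq x y j : is_join le x y j -> j = join x y.
Proof. apply lub_eq_sup. Qed.

Definition bot : T := sup (fun _ => False).
Definition top : T := sup (fun _ => True).

Lemma bot_le x : le bot x. Proof. apply sup_least; intros _ []. Qed.
Lemma le_top x : le x top. Proof. apply sup_ub; auto. Qed.
Lemma is_bot_bot : is_bot le bot. Proof. intro; apply bot_le. Qed.
Lemma is_top_top : is_top le top. Proof. intro; apply le_top. Qed.
Lemma is_bot_eq b : is_bot le b -> b = bot.
Proof. intros H; apply le_antisym; auto using bot_le. Qed.
Lemma is_top_eq t : is_top le t -> t = top.
Proof. intros H; apply le_antisym; auto using le_top. Qed.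
Lemma le_bot_eq x : le x bot -> x = bot. Proof. intros; apply le_antisym; auto using bot_le. Qed.
Lemma top_le_eq x : le top x -> x = top. Proof. intros; apply le_antisym; auto using le_top. Qed.

Definition inf (S : T -> Prop) : T := sup (lower le S).

Lemma inf_spec S : glb le S (inf S).
Proof. split; [intros x Sx; apply sup_least; auto | intros v Hv; apply sup_ub; auto]. Qed.
Lemma inf_lb S x : S x -> le (inf S) x. Proof. intros; apply (proj1 (inf_spec S)); auto. Qed.
Lemma inf_greatest S v : (forall x, S x -> le v x) -> le v (inf S).
Proof. intros; apply (proj2 (inf_spec S)); auto. Qed.
Lemma glb_eq_inf S u : glb le S u -> u = inf S.
Proof. intros; eapply glb_unique; [apply cl_poset | eassumption | apply inf_spec]. Qed.

Lemma meet_comm x y : meet x y = meet y x.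
Proof. apply le_antisym; apply meet_glb; auto using meet_le_l, meet_le_r. Qed.
Lemma join_comm x y : join x y = join y x.
Proof. apply le_antisym; apply join_lub; auto using join_le_l, join_le_r. Qed.
Lemma join_assoc x y z : join x (join y z) = join (join x y) z.
Proof.
  apply le_antisym; repeat apply join_lub;
    eauto using le_trans, join_le_l, join_le_r.
Qed.
Lemma meet_eq_l x y : le x y -> meet x y = x.
Proof. intros; apply le_antisym; auto using meet_le_l, meet_glb, le_refl. Qed.
Lemma meet_eq_r x y : le y x -> meet x y = y.
Proof. intros; apply le_antisym; auto using meet_le_r, meet_glb, le_refl. Qed.
Lemma join_eq_l x y : le y x -> join x y = x.
Proof. intros; apply le_antisym; auto using join_le_l, join_lub, le_refl. Qed.
Lemma join_eq_r x y : le x y -> join x y = y.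
Proof. intros; apply le_antisym; auto using join_le_r, join_lub, le_refl. Qed.
Lemma meet_idem x : meet x x = x. Proof. apply meet_eq_l, le_refl. Qed.
Lemma meet_mono x x' y y' : le x x' -> le y y' -> le (meet x y) (meet x' y').
Proof. intros; apply meet_glb; eauto using le_trans, meet_le_l, meet_le_r. Qed.
Lemma join_mono x x' y y' : le x x' -> le y y' -> le (join x y) (join x' y').
Proof. intros; apply join_lub; eauto using le_trans, join_le_l, join_le_r. Qed.
Lemma meet_bot x : meet x bot = bot. Proof. apply meet_eq_r, bot_le. Qed.
Lemma bot_meet x : meet bot x = bot. Proof. apply meet_eq_l, bot_le. Qed.
Lemma meet_top x : meet x top = x. Proof. apply meet_eq_l, le_top. Qed.
Lemma join_bot x : join x bot = x. Proof. apply join_eq_l, bot_le. Qed.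
Lemma bot_join x : join bot x = x. Proof. apply join_eq_r, bot_le. Qed.
Lemma join_top x : join x top = top. Proof. apply join_eq_r, le_top. Qed.
Lemma top_join x : join top x = top. Proof. apply join_eq_l, le_top. Qed.
Lemma meet_join_absorb x y : meet x (join x y) = x. Proof. apply meet_eq_l, join_le_l. Qed.
Lemma meet_meet_distr a x y : meet a (meet x y) = meet (meet a x) (meet a y).
Proof.
  apply le_antisym; rewrite !le_meet_iff; repeat split;
    eauto using le_trans, meet_le_l, meet_le_r.
Qed.

Lemma sup_nil : sup (fun x => In x nil) = bot.
Proof. unfold bot; f_equal; apply pred_ext; simpl; tauto. Qed.

Lemma sup_cons x l : sup (fun z => In z (x :: l)) = join x (sup (fun z => In z l)).
Proof.
  apply le_antisym.
  - apply sup_least; intros z [<- | Hz]; [apply join_le_l |].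
    eapply le_trans; [apply (sup_ub (fun z => In z l)); exact Hz | apply join_le_r].
  - apply join_lub; [apply sup_ub; left; auto |].
    apply sup_mono; intros; right; auto.
Qed.

Lemma compact_sup_iff a : compact le a <->
  forall S, le a (sup S) ->
  exists l, (forall x, In x l -> S x) /\ le a (sup (fun x => In x l)).
Proof.
  split.
  - intros H S Ha.
    destruct (H S (sup S) (sup_spec S) Ha) as [l [Hl [v [Hv Hav]]]].
    exists l; split; auto. rewrite <- (lub_eq_sup _ _ Hv); auto.
  - intros H S u Hu Ha. rewrite (lub_eq_sup _ _ Hu) in Ha.
    destruct (H S Ha) as [l [Hl Hal]].
    exists l; split; auto. exists (sup (fun x => In x l)); split; auto using sup_spec.
Qed.

End CompleteLatticeTheory.
Arguments sup {T} le {C} S.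
Arguments meet {T} le {C} x y.
Arguments join {T} le {C} x y.
Arguments bot {T} le {C}.
Arguments top {T} le {C}.
Arguments inf {T} le {C} S.

(** * Frames *)

Section FrameTheory.
Context {T : Type} {le : T -> T -> Prop} {C : CompleteLattice le} {D : FrameDistributive le}.

Lemma meet_sup_distr x S :
  meet le x (sup le S) = sup le (fun y => exists t, S t /\ y = meet le x t).
Proof.
  apply lub_eq_sup.
  replace (fun y => exists t, S t /\ y = meet le x t)
    with (fun y => exists t, S t /\ is_meet le x t y).
  - exact (D x S _ _ (sup_spec S) (meet_spec _ _)).
  - apply pred_ext; intros y; split; intros [t [St Ht]]; exists t; split; auto.
    + apply is_meet_eq; auto.
    + subst; apply meet_spec.
Qed.

Lemma meet_join_distr x y z : meet le x (join le y z) = join le (meet le x y) (meet le x z).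
Proof.
  unfold join at 1; rewrite meet_sup_distr; unfold join; f_equal.
  apply pred_ext; intros w; unfold pair; split.
  - intros [t [[-> | ->] ->]]; auto.
  - intros [-> | ->]; eauto.
Qed.

Lemma meet_join_distr_r x y z : meet le (join le y z) x = join le (meet le y x) (meet le z x).
Proof. rewrite meet_comm, meet_join_distr, (meet_comm x y), (meet_comm x z); auto. Qed.

Lemma join_meet_distr x y z : join le x (meet le y z) = meet le (join le x y) (join le x z).
Proof.
  rewrite (meet_join_distr (join le x y)), (meet_comm _ x), meet_join_absorb,
    meet_join_distr_r, join_assoc, (join_eq_l x (meet le x z)) by apply meet_le_l.
  auto.
Qed.

Definition imp x y := sup le (fun w => le (meet le w x) y).

Lemma imp_spec w x y : le w (imp x y) <-> le (meet le w x) y.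
Proof.
  split; intros H.
  - eapply le_trans; [apply meet_mono; [exact H | apply le_refl] |].
    rewrite meet_comm; unfold imp; rewrite meet_sup_distr.
    apply sup_least; intros z [t [Ht ->]]; rewrite meet_comm; auto.
  - apply sup_ub; auto.
Qed.

Lemma is_imp_imp_set x y :
  (fun w => forall m, is_meet le w x m -> le m y) = (fun w => le (meet le w x) y).
Proof.
  apply pred_ext; intros w; split; intros Hw.
  - apply Hw, meet_spec.
  - intros m Hm; rewrite (is_meet_eq _ _ _ Hm); auto.
Qed.

Lemma is_imp_eq x y i : is_imp le x y i -> i = imp x y.
Proof. unfold is_imp; rewrite is_imp_imp_set; apply lub_eq_sup. Qed.

Lemma is_imp_imp x y : is_imp le x y (imp x y).
Proof. unfold is_imp; rewrite is_imp_imp_set; apply sup_spec. Qed.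

Definition neg x := imp x (bot le).

Lemma neg_spec w x : le w (neg x) <-> meet le w x = bot le.
Proof.
  unfold neg; rewrite imp_spec; split; intros H.
  - apply le_bot_eq; auto.
  - rewrite H; apply le_refl.
Qed.
Lemma is_neg_eq x n : is_neg le x n -> n = neg x.
Proof. intros H; apply is_imp_eq, H, is_bot_bot. Qed.
Lemma is_neg_neg x : is_neg le x (neg x).
Proof. intros b Hb; rewrite (is_bot_eq _ Hb); apply is_imp_imp. Qed.
Lemma meet_neg_l x : meet le (neg x) x = bot le.
Proof. apply neg_spec, le_refl. Qed.
Lemma meet_neg_r x : meet le x (neg x) = bot le.
Proof. rewrite meet_comm; apply meet_neg_l. Qed.
Lemma meet_neg_le a x : le a x -> meet le a (neg x) = bot le.
Proof.
  intros H; apply le_bot_eq.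
  rewrite <- (meet_neg_r x); apply meet_mono; [exact H | apply le_refl].
Qed.
Lemma neg_anti x y : le x y -> le (neg y) (neg x).
Proof. intros H; apply neg_spec; rewrite meet_comm; apply meet_neg_le; auto. Qed.
Lemma le_neg_neg x : le x (neg (neg x)).
Proof. apply neg_spec, meet_neg_r. Qed.
Lemma neg_join x y : neg (join le x y) = meet le (neg x) (neg y).
Proof.
  apply le_antisym.
  - apply meet_glb; apply neg_anti; [apply join_le_l | apply join_le_r].
  - apply neg_spec; rewrite meet_join_distr; apply le_bot_eq; apply join_lub.
    + rewrite <- (meet_neg_l x); apply meet_mono; [apply meet_le_l | apply le_refl].
    + rewrite <- (meet_neg_l y); apply meet_mono; [apply meet_le_r | apply le_refl].
Qed.
Lemma neg_bot : neg (bot le) = top le.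
Proof. apply top_le_eq, neg_spec, meet_bot. Qed.

Lemma complement_eq_neg x c : meet le x c = bot le -> join le x c = top le -> c = neg x.
Proof.
  intros H1 H2; apply le_antisym.
  - apply neg_spec; rewrite meet_comm; auto.
  - rewrite <- (meet_top (neg x)), <- H2, meet_join_distr, meet_neg_l, bot_join.
    apply meet_le_r.
Qed.

Definition compl x := join le x (neg x) = top le.

Lemma compl_neg_neg x : compl x -> neg (neg x) = x.
Proof.
  intros H; symmetry; apply complement_eq_neg; [apply meet_neg_l |].
  rewrite join_comm; auto.
Qed.

Lemma compl_join x y : compl x -> compl y -> compl (join le x y).
Proof.
  intros Hx Hy; unfold compl in *.
  rewrite neg_join, join_meet_distr; apply top_le_eq, meet_glb.
  - rewrite <- Hx; apply join_mono; [apply join_le_l | apply le_refl].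
  - rewrite <- Hy; apply join_mono; [apply join_le_r | apply le_refl].
Qed.

Lemma compl_bot : compl (bot le).
Proof. unfold compl; rewrite neg_bot; apply join_top. Qed.

Lemma join_neg_top_le x y : join le (neg x) y = top le -> le x y.
Proof.
  intros H; rewrite <- (meet_top x), <- H, meet_join_distr, meet_neg_r, bot_join.
  apply meet_le_r.
Qed.

Lemma neg_sup_list_join_top a l :
  (forall x, In x l -> join le (neg x) a = top le) ->
  join le (neg (sup le (fun z => In z l))) a = top le.
Proof.
  induction l as [|x l IH]; intros H.
  - rewrite sup_nil, neg_bot; apply top_join.
  - rewrite sup_cons, neg_join, join_comm, join_meet_distr, !(join_comm a), H, IH.
    + apply meet_top.
    + intros; apply H; right; auto.
    + left; auto.
Qed.

Lemma regular_set y :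
  (fun x => exists n, is_neg le x n /\ forall t, is_top le t -> is_join le n y t)
  = (fun x => join le (neg x) y = top le).
Proof.
  apply pred_ext; intros x; split.
  - intros [n [Hn Ht]]; rewrite <- (is_neg_eq _ _ Hn).
    symmetry; apply is_join_eq, Ht, is_top_top.
  - intros H; exists (neg x); split; [apply is_neg_neg |].
    intros t Ht; rewrite (is_top_eq _ Ht), <- H; apply join_spec.
Qed.

Lemma regular_eq : regular le -> forall y, y = sup le (fun x => join le (neg x) y = top le).
Proof. intros H y; rewrite <- regular_set; apply lub_eq_sup, H. Qed.

Lemma regular_intro :
  (forall y, le y (sup le (fun x => join le (neg x) y = top le))) -> regular le.
Proof.
  intros H y; rewrite regular_set; split.
  - intros x Hx; apply join_neg_top_le; auto.
  - intros v Hv; eapply le_trans; [apply H | apply sup_least; auto].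
Qed.

Lemma ext_disconnected_compl_neg :
  extremally_disconnected le -> forall x, compl (neg x).
Proof.
  intros H x; symmetry; apply is_join_eq, (H x); auto using is_neg_neg, is_top_top.
Qed.

Lemma ext_disconnected_intro : (forall x, compl (neg x)) -> extremally_disconnected le.
Proof.
  intros H x n nn t Hn Hnn Ht.
  rewrite (is_neg_eq _ _ Hnn), (is_neg_eq _ _ Hn), (is_top_eq _ Ht), <- (H x).
  apply join_spec.
Qed.

Lemma coherent_intro :
  (forall a b, compact le a -> compact le b -> compact le (meet le a b)) ->
  compact le (top le) ->
  (forall x, le x (sup le (fun c => compact le c /\ le c x))) -> coherent le.
Proof.
  intros Hmeet Htop Hgen; split; [| split].
  - intros a b m Ha Hb Hm; rewrite (is_meet_eq _ _ _ Hm); auto.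
  - intros t Ht; rewrite (is_top_eq _ Ht); auto.
  - intros x; split; [intros c [_ Hc]; auto |].
    intros v Hv; eapply le_trans; [apply Hgen | apply sup_least; auto].
Qed.

Lemma compact_compl : regular le -> forall a, compact le a -> compl a.
Proof.
  intros Hreg a Ha; rewrite compact_sup_iff in Ha.
  assert (Hcover : le a (sup le (fun x => join le (neg x) a = top le)))
    by (rewrite <- (regular_eq Hreg a); apply le_refl).
  destruct (Ha _ Hcover) as [l [Hl Hal]].
  apply top_le_eq; rewrite <- (neg_sup_list_join_top a l Hl).
  apply join_lub; [| apply join_le_l].
  eapply le_trans; [apply neg_anti, Hal | apply join_le_r].
Qed.

Lemma sup_list_cover_compl (S : T -> Prop) a l :
  (forall x, In x l -> S x \/ x = neg a) ->
  exists l', (forall x, In x l' -> S x) /\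
    le (sup le (fun x => In x l)) (join le (sup le (fun x => In x l')) (neg a)).
Proof.
  induction l as [|x l IH]; intros H.
  - exists nil; split; [intros _ [] | rewrite sup_nil; apply bot_le].
  - destruct IH as [l' [Hl' Hle]]; [intros; apply H; right; auto |].
    destruct (H x (or_introl eq_refl)) as [Sx | ->].
    + exists (x :: l'); split; [intros z [<- | Hz]; auto |].
      rewrite !sup_cons, <- join_assoc; apply join_mono; [apply le_refl | exact Hle].
    + exists l'; split; auto.
      rewrite sup_cons; apply join_lub; [apply join_le_r | exact Hle].
Qed.

Lemma compl_compact : compact le (top le) -> forall a, compl a -> compact le a.
Proof.
  intros Htop a Ha; rewrite compact_sup_iff in *; intros S HS.
  assert (Hcover : le (top le) (sup le (fun x => S x \/ x = neg a))).
  { rewrite <- Ha; apply join_lub.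
    - eapply le_trans; [exact HS | apply sup_mono; auto].
    - apply sup_ub; auto. }
  destruct (Htop _ Hcover) as [l [Hl Hle]].
  destruct (sup_list_cover_compl S a l Hl) as [l' [Hl' Hle']].
  exists l'; split; auto.
  rewrite <- (meet_top a).
  eapply le_trans; [apply meet_mono; [apply le_refl | eapply le_trans; [exact Hle | exact Hle']] |].
  rewrite meet_join_distr, meet_neg_r, join_bot; apply meet_le_r.
Qed.

End FrameTheory.
Arguments neg {T} le {C} _.
Arguments imp {T} le {C} _ _.
Arguments compl {T} le {C} _.

Section CompleteBooleanAlgebra.
Context {T : Type} {le : T -> T -> Prop} {C : CompleteLattice le} (HA : is_cba le).

Lemma cba_meet_join_distr x y z : meet le x (join le y z) = join le (meet le x y) (meet le x z).
Proof. destruct HA as [_ [_ [_ [H _]]]]; eapply H; apply join_spec || apply meet_spec. Qed.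

Lemma cba_complement x : exists c, meet le x c = bot le /\ join le x c = top le.
Proof.
  destruct HA as [_ [_ [_ [_ H]]]]; destruct (H x) as [c [Hj Hm]]; exists c; split.
  - symmetry; apply is_meet_eq, Hm, is_bot_bot.
  - symmetry; apply is_join_eq, Hj, is_top_top.
Qed.

Lemma cba_frame_distributive : FrameDistributive le.
Proof.
  intros x S s m Hs Hm.
  rewrite (lub_eq_sup _ _ Hs) in *; rewrite (is_meet_eq _ _ _ Hm) in *; clear Hs Hm m s.
  replace (fun y => exists t, S t /\ is_meet le x t y)
    with (fun y => exists t, S t /\ y = meet le x t).
  2:{ apply pred_ext; intros y; split; intros [t [St Ht]]; exists t; split; auto.
      - subst; apply meet_spec.
      - apply is_meet_eq; auto. }
  set (u := sup le (fun y => exists t, S t /\ y = meet le x t)).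
  replace (meet le x (sup le S)) with u; [apply sup_spec |].
  destruct (cba_complement x) as [c [Hmeet Hjoin]].
  apply le_antisym.
  - apply sup_least; intros y [t [St ->]]; apply meet_mono; [apply le_refl | apply sup_ub; auto].
  - assert (Hcover : le (sup le S) (join le u c)).
    { apply sup_least; intros t St.
      rewrite <- (meet_top t), <- Hjoin, cba_meet_join_distr, (meet_comm t x).
      apply join_mono; [apply sup_ub; exists t; auto | apply meet_le_r]. }
    eapply le_trans; [apply meet_mono; [apply le_refl | exact Hcover] |].
    rewrite cba_meet_join_distr, Hmeet, join_bot; apply meet_le_r.
Qed.

Lemma cba_compl x : compl le x.
Proof.
  pose proof cba_frame_distributive.
  destruct (cba_complement x) as [c [Hmeet Hjoin]]; unfold compl.
  rewrite <- (complement_eq_neg x c); auto.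
Qed.

End CompleteBooleanAlgebra.

(** * Compact opens of a Stonean frame *)

Lemma copen_eq {T} (le : T -> T -> Prop) (x y : copen_t le) : proj1_sig x = proj1_sig y -> x = y.
Proof. destruct x, y; simpl; intros ->; f_equal; apply proof_irrelevance. Qed.

Lemma copen_poset {T} (le : T -> T -> Prop) : is_poset le -> is_poset (copen_le le).
Proof.
  intros [Hrefl [Htrans Hanti]]; unfold copen_le; split; [| split]; eauto.
  intros; apply copen_eq; auto.
Qed.

Section CompactOpens.
Context {T : Type} {le : T -> T -> Prop} {C : CompleteLattice le} {D : FrameDistributive le}
  (Hcoh : coherent le) (Hreg : regular le) (HED : extremally_disconnected le).

Lemma compact_top : compact le (top le).
Proof. apply Hcoh, is_top_top. Qed.

Lemma compact_iff_compl a : compact le a <-> compl le a.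
Proof. split; [apply compact_compl; auto | apply compl_compact, compact_top]. Qed.

Lemma compact_neg y : compact le (neg le y).
Proof. apply compact_iff_compl, ext_disconnected_compl_neg; auto. Qed.
Lemma compact_bot : compact le (bot le).
Proof. apply compact_iff_compl, compl_bot. Qed.
Lemma compact_join a b : compact le a -> compact le b -> compact le (join le a b).
Proof. rewrite !compact_iff_compl; apply compl_join. Qed.
Lemma compact_meet a b : compact le a -> compact le b -> compact le (meet le a b).
Proof. intros Ha Hb; eapply (proj1 Hcoh); [exact Ha | exact Hb | apply meet_spec]. Qed.
Lemma compact_neg_neg a : compact le a -> neg le (neg le a) = a.
Proof. intros; apply compl_neg_neg, compact_iff_compl; auto. Qed.
Lemma sup_compact_below x : x = sup le (fun c => compact le c /\ le c x).
Proof. apply lub_eq_sup, Hcoh. Qed.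

Definition cbot : copen_t le := exist _ (bot le) compact_bot.
Definition ctop : copen_t le := exist _ (top le) compact_top.
Definition cjoin (x y : copen_t le) : copen_t le :=
  exist _ (join le (proj1_sig x) (proj1_sig y)) (compact_join _ _ (proj2_sig x) (proj2_sig y)).
Definition cmeet (x y : copen_t le) : copen_t le :=
  exist _ (meet le (proj1_sig x) (proj1_sig y)) (compact_meet _ _ (proj2_sig x) (proj2_sig y)).
Definition cneg (x : copen_t le) : copen_t le := exist _ (neg le (proj1_sig x)) (compact_neg _).

Definition csup (S : copen_t le -> Prop) : copen_t le :=
  exist _ (neg le (neg le (sup le (image (@proj1_sig _ _) S)))) (compact_neg _).

Lemma copen_cl_poset : is_poset (copen_le le). Proof. apply copen_poset, cl_poset. Qed.

Lemma csup_spec S : lub (copen_le le) S (csup S).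
Proof.
  split; unfold copen_le; simpl.
  - intros x Sx; eapply le_trans; [| apply le_neg_neg].
    apply sup_ub; exists x; auto.
  - intros v Hv; rewrite <- (compact_neg_neg _ (proj2_sig v)).
    apply neg_anti, neg_anti, sup_least; intros y [x [Sx ->]]; apply Hv; auto.
Qed.

Lemma cjoin_spec x y : is_join (copen_le le) x y (cjoin x y).
Proof.
  split; unfold copen_le; simpl.
  - intros z [-> | ->]; [apply join_le_l | apply join_le_r].
  - intros v Hv; apply join_lub; apply Hv; [left | right]; auto.
Qed.

Lemma cmeet_spec x y : is_meet (copen_le le) x y (cmeet x y).
Proof.
  split; unfold copen_le; simpl.
  - intros z [-> | ->]; [apply meet_le_l | apply meet_le_r].
  - intros v Hv; apply meet_glb; apply Hv; [left | right]; auto.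
Qed.

Lemma copen_lub_iff S u :
  lub (copen_le le) S u <-> proj1_sig u = neg le (neg le (sup le (image (@proj1_sig _ _) S))).
Proof.
  rewrite (lub_iff_eq _ _ _ _ copen_cl_poset (csup_spec S)).
  split; [intros ->; auto | intros; apply copen_eq; auto].
Qed.

Lemma copen_join_iff x y j :
  is_join (copen_le le) x y j <-> proj1_sig j = join le (proj1_sig x) (proj1_sig y).
Proof.
  unfold is_join; rewrite (lub_iff_eq _ _ _ _ copen_cl_poset (cjoin_spec x y)).
  split; [intros ->; auto | intros; apply copen_eq; auto].
Qed.

Lemma copen_meet_iff x y m :
  is_meet (copen_le le) x y m <-> proj1_sig m = meet le (proj1_sig x) (proj1_sig y).
Proof.
  unfold is_meet; rewrite (glb_iff_eq _ _ _ _ copen_cl_poset (cmeet_spec x y)).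
  split; [intros ->; auto | intros; apply copen_eq; auto].
Qed.

Lemma copen_top_iff t : is_top (copen_le le) t <-> proj1_sig t = top le.
Proof.
  split; [intros H; apply top_le_eq, (H ctop) |].
  intros E x; unfold copen_le; rewrite E; apply le_top.
Qed.

Lemma copen_bot_iff b : is_bot (copen_le le) b <-> proj1_sig b = bot le.
Proof.
  split; [intros H; apply le_bot_eq, (H cbot) |].
  intros E x; unfold copen_le; rewrite E; apply bot_le.
Qed.

Lemma copen_complement_iff x c :
  ((forall t, is_top (copen_le le) t -> is_join (copen_le le) x c t) /\
   (forall b, is_bot (copen_le le) b -> is_meet (copen_le le) x c b)) <->
  (join le (proj1_sig x) (proj1_sig c) = top le /\ meet le (proj1_sig x) (proj1_sig c) = bot le).
Proof.
  split; intros [Hj Hm]; split.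
  - symmetry; apply (proj1 (copen_join_iff x c ctop)), Hj, copen_top_iff; reflexivity.
  - symmetry; apply (proj1 (copen_meet_iff x c cbot)), Hm, copen_bot_iff; reflexivity.
  - intros t Ht; apply copen_join_iff; rewrite (proj1 (copen_top_iff t) Ht); auto.
  - intros b Hb; apply copen_meet_iff; rewrite (proj1 (copen_bot_iff b) Hb); auto.
Qed.

Lemma copen_cba : is_cba (copen_le le).
Proof.
  split; [apply copen_cl_poset | split; [| split; [| split]]].
  - intros S; exists (csup S); apply csup_spec.
  - intros x y; exists (cmeet x y); apply cmeet_spec.
  - intros x y z j m a b r Hj Hm Ha Hb Hr; apply copen_eq.
    rewrite copen_join_iff in Hj, Hr; rewrite copen_meet_iff in Hm, Ha, Hb.
    rewrite Hm, Hr, Hj, Ha, Hb; apply meet_join_distr.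
  - intros x; exists (cneg x); apply copen_complement_iff; simpl; split.
    + apply compact_iff_compl, proj2_sig.
    + apply meet_neg_r.
Qed.

End CompactOpens.

(** * Normal valuations *)

Lemma directed_image {A B} (leA : A -> A -> Prop) (leB : B -> B -> Prop) (f : A -> B) S :
  (forall x y, leA x y -> leB (f x) (f y)) -> directed leA S -> directed leB (image f S).
Proof.
  intros Hf [[s Ss] Hdir]; split; [exists (f s), s; auto |].
  intros a b [a' [Sa ->]] [b' [Sb ->]].
  destruct (Hdir a' b' Sa Sb) as [c [Sc [Hac Hbc]]].
  exists (f c); split; [exists c; auto | auto].
Qed.

Lemma values_image {A B} (f : A -> B) (nu : B -> R) S :
  (fun r => exists s, image f S s /\ r = nu s) = (fun r => exists s, S s /\ r = nu (f s)).
Proof.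
  apply pred_ext; intros r; split.
  - intros [y [[x [Sx ->]] ->]]; exists x; auto.
  - intros [x [Sx ->]]; exists (f x); split; [exists x |]; auto.
Qed.

Section NormalValuation.
Context {T : Type} {le : T -> T -> Prop} {C : CompleteLattice le} {D : FrameDistributive le}
  (nu : T -> R) (Hnu : continuous_valuation le nu) (Hnormal : normal_valuation le nu).

Lemma nu_ge0 x : 0 <= nu x. Proof. apply Hnu. Qed.
Lemma nu_bot : nu (bot le) = 0. Proof. apply Hnu, is_bot_bot. Qed.
Lemma nu_mono x y : le x y -> nu x <= nu y. Proof. apply Hnu. Qed.
Lemma nu_modular x y : nu (join le x y) + nu (meet le x y) = nu x + nu y.
Proof. apply Hnu; [apply join_spec | apply meet_spec]. Qed.
Lemma nu_directed_sup S :
  directed le S -> is_lub (fun r => exists s, S s /\ r = nu s) (nu (sup le S)).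
Proof. intros; apply Hnu; [auto | apply sup_spec]. Qed.
Lemma nu_neg_neg x : nu (neg le (neg le x)) = nu x.
Proof. apply (Hnormal x (neg le x)); apply is_neg_neg. Qed.

(* By modularity the null elements are directed, so by continuity their supremum is null. *)
Definition null_part : T := sup le (fun x => nu x = 0).

Lemma null_directed : directed le (fun x => nu x = 0).
Proof.
  split; [exists (bot le); apply nu_bot |].
  intros a b Ha Hb; exists (join le a b); split; [| split; [apply join_le_l | apply join_le_r]].
  pose proof (nu_modular a b); pose proof (nu_ge0 (join le a b)); pose proof (nu_ge0 (meet le a b)).
  lra.
Qed.

Lemma nu_null_part : nu null_part = 0.
Proof.
  destruct (nu_directed_sup _ null_directed) as [_ Hleast]; pose proof (nu_ge0 null_part).
  enough (nu null_part <= 0) by lra.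
  apply Hleast; intros r [s [Hs ->]]; lra.
Qed.

Lemma le_null_part_iff x : le x null_part <-> nu x = 0.
Proof.
  split; [| intros H; apply (sup_ub (fun x => nu x = 0)); exact H].
  intros H; pose proof (nu_mono _ _ H); pose proof (nu_ge0 x); rewrite nu_null_part in *; lra.
Qed.

Lemma null_part_regular : neg le (neg le null_part) = null_part.
Proof.
  apply le_antisym; [| apply le_neg_neg].
  apply le_null_part_iff; rewrite nu_neg_neg; apply nu_null_part.
Qed.

Section Stonean.
Hypotheses (Hcoh : coherent le) (Hreg : regular le) (HED : extremally_disconnected le).

Lemma copen_valuation_faithful (c : copen_t le) :
  le (proj1_sig c) (neg le null_part) ->
  faithful_cv_below (copen_le le) c (fun x => nu (proj1_sig x)).
Proof.
  intros Hc; split; [| split; [| split; [| split; [| split]]]].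
  - intros x _; apply nu_ge0.
  - intros b Hb; rewrite copen_bot_iff in Hb by auto; rewrite Hb; apply nu_bot.
  - intros x y j m _ _ Hj Hm.
    rewrite copen_join_iff in Hj by auto; rewrite copen_meet_iff in Hm by auto.
    rewrite Hj, Hm; apply nu_modular.
  - intros x y _ _; apply nu_mono.
  - intros S u _ HS Hu; rewrite copen_lub_iff in Hu by auto; rewrite Hu, nu_neg_neg.
    assert (Hsup := nu_directed_sup _ (directed_image (copen_le le) le _ S (fun x y H => H) HS)).
    rewrite values_image in Hsup; exact Hsup.
  - intros b Hb Hnull; apply copen_bot_iff; auto.
    apply le_bot_eq; rewrite <- (meet_neg_r null_part); apply meet_glb.
    + apply le_null_part_iff; auto.
    + eapply le_trans; [exact Hb | exact Hc].
Qed.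

Lemma nu_neg_faithful_bound (v : copen_t le) :
  (forall c, (exists mu, faithful_cv_below (copen_le le) c mu) -> le (proj1_sig c) (proj1_sig v)) ->
  nu (neg le (proj1_sig v)) = 0.
Proof.
  intros Hv; set (w := neg le (proj1_sig v)).
  set (c := exist _ (meet le w (neg le null_part))
              (compact_meet Hcoh _ _ (compact_neg Hcoh Hreg HED _) (compact_neg Hcoh Hreg HED _))
            : copen_t le).
  assert (Hcv : le (proj1_sig c) (proj1_sig v)).
  { apply Hv; eexists; apply copen_valuation_faithful, meet_le_r. }
  assert (Hc0 : meet le w (neg le null_part) = bot le).
  { apply le_bot_eq; rewrite <- (meet_neg_l (proj1_sig v)).
    apply meet_glb; [apply meet_le_l | exact Hcv]. }
  apply le_null_part_iff; rewrite <- null_part_regular; apply neg_spec, Hc0.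
Qed.

End Stonean.
End NormalValuation.

Theorem copen_localizable (T : Type) (le : T -> T -> Prop) :
  hyperstonean le -> localizable (copen_le le).
Proof.
  intros [[HF [Hcoh [Hreg HED]]] Hval].
  pose proof (is_frame_complete_lattice HF); pose proof (is_frame_distributive HF).
  split; [apply copen_cba; auto |].
  intros t Ht; rewrite copen_top_iff in Ht by auto.
  split; [intros a _ | intros v Hv]; unfold copen_le; rewrite Ht; [apply le_top |].
  assert (Hnegv : is_bot le (neg le (proj1_sig v))).
  { apply NNPP; intros Hnz; destruct (Hval _ Hnz) as [nu [Hnu [Hnormal Hnu0]]].
    apply Hnu0, (nu_neg_faithful_bound nu); auto. }
  rewrite <- (compact_neg_neg Hcoh Hreg _ (proj2_sig v)), (is_bot_eq _ Hnegv), neg_bot.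
  apply le_refl.
Qed.

Lemma ideal_eq {T} (le : T -> T -> Prop) (I J : ideal_t le) :
  (forall x, proj1_sig I x <-> proj1_sig J x) -> I = J.
Proof.
  destruct I as [I HI], J as [J HJ]; simpl; intros H.
  assert (I = J) by (apply pred_ext; auto); subst; f_equal; apply proof_irrelevance.
Qed.

Section CompactOpenIdeals.
Context {T : Type} {le : T -> T -> Prop} {C : CompleteLattice le} {D : FrameDistributive le}
  (Hcoh : coherent le) (Hreg : regular le).

Definition carrier_sup (J : ideal_t (copen_le le)) : T :=
  sup le (fun x => exists c, proj1_sig J c /\ x = proj1_sig c).

Lemma ideal_contains_sup_list (K : ideal_t (copen_le le)) l :
  (forall x, In x l -> exists c, proj1_sig K c /\ x = proj1_sig c) ->
  exists k, proj1_sig K k /\ proj1_sig k = sup le (fun x => In x l).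
Proof.
  destruct (proj2_sig K) as [_ [Kbot Kjoin]].
  induction l as [|x l IH]; intros Hl.
  - exists (cbot Hcoh Hreg); split.
    + apply Kbot, copen_bot_iff; auto.
    + simpl; rewrite sup_nil; auto.
  - destruct IH as [k [Kk Ek]]; [intros; apply Hl; right; auto |].
    destruct (Hl x (or_introl eq_refl)) as [c [Kc ->]].
    exists (cjoin Hcoh Hreg c k); split.
    + eapply Kjoin; [exact Kc | exact Kk | apply cjoin_spec].
    + rewrite sup_cons, <- Ek; reflexivity.
Qed.

Lemma le_carrier_sup_iff (K : ideal_t (copen_le le)) (c : copen_t le) :
  le (proj1_sig c) (carrier_sup K) <-> proj1_sig K c.
Proof.
  split; [| intros Kc; apply sup_ub; exists c; auto].
  intros Hc; pose proof (proj2_sig c) as Hcc; simpl in Hcc; rewrite compact_sup_iff in Hcc.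
  destruct (Hcc _ Hc) as [l [Hl Hcl]].
  destruct (ideal_contains_sup_list K l Hl) as [k [Kk Ek]].
  apply (proj1 (proj2_sig K) c k); auto.
  unfold copen_le; rewrite Ek; auto.
Qed.

Lemma carrier_sup_le_iff (J K : ideal_t (copen_le le)) :
  ideal_le (copen_le le) J K <-> le (carrier_sup J) (carrier_sup K).
Proof.
  split.
  - intros H; apply sup_mono; intros x [c [Jc ->]]; exists c; auto.
  - intros H c Jc; apply le_carrier_sup_iff.
    eapply le_trans; [apply le_carrier_sup_iff; exact Jc | exact H].
Qed.

Definition compact_below (y : T) : ideal_t (copen_le le).
Proof.
  refine (exist _ (fun c : copen_t le => le (proj1_sig c) y) _); split; [| split].
  - intros a b Hab Hb; eapply le_trans; eauto.
  - intros b Hb; rewrite copen_bot_iff in Hb by auto; rewrite Hb; apply bot_le.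
  - intros a b j Ha Hb Hj; rewrite copen_join_iff in Hj by auto; rewrite Hj; apply join_lub; auto.
Defined.

Lemma carrier_sup_compact_below y : carrier_sup (compact_below y) = y.
Proof.
  rewrite (sup_compact_below Hcoh y) at 2; unfold carrier_sup; f_equal.
  apply pred_ext; intros x; split.
  - intros [c [Hc ->]]; split; [apply proj2_sig | auto].
  - intros [Hx Hxy]; exists (exist _ x Hx); auto.
Qed.

End CompactOpenIdeals.

Theorem ideal_copen_iso (T : Type) (le : T -> T -> Prop) : hyperstonean le ->
  exists eta : ideal_t (copen_le le) -> T,
    (forall J, lub le (fun x => exists c, proj1_sig J c /\ x = proj1_sig c) (eta J)) /\
    order_iso (ideal_le (copen_le le)) le eta.
Proof.
  intros [[HF [Hcoh [Hreg _]]] _].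
  pose proof (is_frame_complete_lattice HF); pose proof (is_frame_distributive HF).
  exists carrier_sup; split; [intros J; apply sup_spec |].
  split; [| split].
  - intros y; exists (compact_below Hcoh Hreg y); apply carrier_sup_compact_below.
  - intros J K E; apply ideal_eq; intros x; split; intros Hx.
    + apply (proj2 (carrier_sup_le_iff Hcoh Hreg J K)); auto; rewrite E; apply le_refl.
    + apply (proj2 (carrier_sup_le_iff Hcoh Hreg K J)); auto; rewrite E; apply le_refl.
  - intros J K; apply carrier_sup_le_iff; auto.
Qed.

(** * Open frame homomorphisms *)

Section FrameHom.
Context {TK TH : Type} {leK : TK -> TK -> Prop} {leH : TH -> TH -> Prop}
  {CK : CompleteLattice leK} {CH : CompleteLattice leH}
  (f : TK -> TH) (Hf : frame_hom leK leH f).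

Lemma frame_hom_sup S : f (sup leK S) = sup leH (image f S).
Proof. apply lub_eq_sup, Hf, sup_spec. Qed.
Lemma frame_hom_bot : f (bot leK) = bot leH.
Proof. unfold bot; rewrite frame_hom_sup, image_empty; auto. Qed.
Lemma frame_hom_join x y : f (join leK x y) = join leH (f x) (f y).
Proof. unfold join at 1; rewrite frame_hom_sup, image_pair; auto. Qed.
Lemma frame_hom_meet x y : f (meet leK x y) = meet leH (f x) (f y).
Proof. apply is_meet_eq, Hf, meet_spec. Qed.
Lemma frame_hom_top : f (top leK) = top leH.
Proof. apply is_top_eq, Hf, is_top_top. Qed.
Lemma frame_hom_mono x y : leK x y -> leH (f x) (f y).
Proof. intros H; rewrite <- (meet_eq_l x y H), frame_hom_meet; apply meet_le_r. Qed.

End FrameHom.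

Section OpenFrameHom.
Context {TK TH : Type} {leK : TK -> TK -> Prop} {leH : TH -> TH -> Prop}
  {CK : CompleteLattice leK} {DK : FrameDistributive leK}
  {CH : CompleteLattice leH} {DH : FrameDistributive leH}
  (f : TK -> TH) (Hf : open_frame_hom leK leH f).

Lemma open_frame_hom_neg x : f (neg leK x) = neg leH (f x).
Proof.
  destruct Hf as [Hf0 [_ Himp]].
  pose proof (Himp _ _ _ (is_imp_imp x (bot leK))) as H.
  rewrite (frame_hom_bot f Hf0) in H; apply is_imp_eq in H; exact H.
Qed.

Lemma open_frame_hom_compl x : compl leK x -> compl leH (f x).
Proof.
  unfold compl; intros H.
  rewrite <- open_frame_hom_neg, <- (frame_hom_join f (proj1 Hf)), H.
  apply (frame_hom_top f (proj1 Hf)).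
Qed.

Lemma open_frame_hom_compact (HcohK : coherent leK) (HregK : regular leK)
  (HcohH : coherent leH) (HregH : regular leH) x :
  compact leK x -> compact leH (f x).
Proof.
  rewrite (compact_iff_compl HcohK HregK), (compact_iff_compl HcohH HregH).
  apply open_frame_hom_compl.
Qed.

End OpenFrameHom.

Theorem copen_map (TH TK : Type) (leH : TH -> TH -> Prop) (leK : TK -> TK -> Prop)
  (f : TK -> TH) :
  hyperstonean leH -> hyperstonean leK -> open_frame_hom leK leH f ->
  exists g : copen_t leK -> copen_t leH,
    (forall c, proj1_sig (g c) = f (proj1_sig c)) /\
    sup_bool_hom (copen_le leK) (copen_le leH) g.
Proof.
  intros [[HFH [HcohH [HregH HEDH]]] _] [[HFK [HcohK [HregK HEDK]]] _] Hf.
  pose proof (is_frame_complete_lattice HFH); pose proof (is_frame_distributive HFH).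
  pose proof (is_frame_complete_lattice HFK); pose proof (is_frame_distributive HFK).
  pose proof (proj1 Hf) as Hf0.
  set (g := fun c : copen_t leK =>
    exist _ (f (proj1_sig c)) (open_frame_hom_compact f Hf HcohK HregK HcohH HregH _ (proj2_sig c))
    : copen_t leH).
  exists g; split; [reflexivity | split; [| split; [| split]]].
  - intros S u Hu; rewrite copen_lub_iff in Hu by auto; apply copen_lub_iff; auto; simpl.
    rewrite Hu, !(open_frame_hom_neg f Hf), (frame_hom_sup f Hf0); do 3 f_equal.
    apply pred_ext; intros y; split.
    + intros [x [[c [Sc ->]] ->]]; exists (g c); split; [exists c |]; auto.
    + intros [x [[c [Sc ->]] ->]]; exists (proj1_sig c); split; [exists c |]; auto.
  - intros x y m Hm; rewrite copen_meet_iff in Hm by auto; apply copen_meet_iff; auto; simpl.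
    rewrite Hm; apply (frame_hom_meet f Hf0).
  - intros t Ht; rewrite copen_top_iff in Ht by auto; apply copen_top_iff; auto; simpl.
    rewrite Ht; apply (frame_hom_top f Hf0).
  - intros x c Hjoin Hmeet.
    destruct (proj1 (copen_complement_iff HcohK HregK x c) (conj Hjoin Hmeet)) as [Ej Em].
    apply copen_complement_iff; auto; simpl.
    rewrite <- (frame_hom_join f Hf0), <- (frame_hom_meet f Hf0), Ej, Em.
    split; [apply (frame_hom_top f Hf0) | apply (frame_hom_bot f Hf0)].
Qed.

Theorem unit_natural (TH TK : Type) (leH : TH -> TH -> Prop) (leK : TK -> TK -> Prop)
  (f : TK -> TH) :
  hyperstonean leH -> hyperstonean leK -> open_frame_hom leK leH f ->
  forall (J : ideal_t (copen_le leK)) (u : TK),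
    lub leK (fun x => exists c, proj1_sig J c /\ x = proj1_sig c) u ->
    lub leH (fun x => exists c : copen_t leH,
                (exists d, proj1_sig J d /\ leH (proj1_sig c) (f (proj1_sig d))) /\
                x = proj1_sig c) (f u).
Proof.
  intros [[HFH [HcohH [HregH _]]] _] [[HFK [HcohK [HregK _]]] _] Hf J u Hu.
  pose proof (is_frame_complete_lattice HFH); pose proof (is_frame_distributive HFH).
  pose proof (is_frame_complete_lattice HFK); pose proof (is_frame_distributive HFK).
  rewrite (lub_eq_sup _ _ Hu), (frame_hom_sup f (proj1 Hf)); split.
  - intros x [c [[d [Jd Hcd]] ->]]; eapply le_trans; [exact Hcd |].
    apply sup_ub; exists (proj1_sig d); split; [exists d |]; auto.
  - intros v Hv; apply sup_least; intros y [x [[d [Jd ->]] ->]].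
    apply Hv.
    exists (exist _ (f (proj1_sig d))
              (open_frame_hom_compact f Hf HcohK HregK HcohH HregH _ (proj2_sig d))).
    split; [exists d; split; [auto | apply le_refl] | reflexivity].
Qed.

(** * The frame of ideals *)

Section IdealFrame.
Context {T : Type} {le : T -> T -> Prop} {C : CompleteLattice le} {D : FrameDistributive le}.

Lemma ideal_down_closed (I : ideal_t le) x y : le x y -> proj1_sig I y -> proj1_sig I x.
Proof. apply (proj2_sig I). Qed.
Lemma ideal_bot (I : ideal_t le) : proj1_sig I (bot le).
Proof. apply (proj2_sig I), is_bot_bot. Qed.
Lemma ideal_join (I : ideal_t le) x y :
  proj1_sig I x -> proj1_sig I y -> proj1_sig I (join le x y).
Proof. intros Hx Hy; exact (proj2 (proj2 (proj2_sig I)) _ _ _ Hx Hy (join_spec x y)). Qed.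

Lemma is_ideal_intro (I : T -> Prop) :
  (forall x y, le x y -> I y -> I x) -> I (bot le) ->
  (forall x y, I x -> I y -> I (join le x y)) -> is_ideal le I.
Proof.
  intros Hdown Hbot Hjoin; split; [| split]; auto.
  - intros b Hb; rewrite (is_bot_eq _ Hb); auto.
  - intros x y j Hx Hy Hj; rewrite (is_join_eq _ _ _ Hj); auto.
Qed.

Inductive Generated (S : ideal_t le -> Prop) : T -> Prop :=
| Generated_in I x : S I -> proj1_sig I x -> Generated S x
| Generated_bot : Generated S (bot le)
| Generated_join x y : Generated S x -> Generated S y -> Generated S (join le x y)
| Generated_down x y : le x y -> Generated S y -> Generated S x.

Definition ideal_gen (S : ideal_t le -> Prop) : ideal_t le :=
  exist _ (Generated S)
    (is_ideal_intro _ (fun x y H => Generated_down S x y H) (Generated_bot S) (Generated_join S)).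

Lemma generated_least S (K : ideal_t le) :
  (forall I x, S I -> proj1_sig I x -> proj1_sig K x) -> forall x, Generated S x -> proj1_sig K x.
Proof.
  intros H x G; induction G.
  - eauto.
  - apply ideal_bot.
  - apply ideal_join; auto.
  - eapply ideal_down_closed; eauto.
Qed.

Lemma generated_mono (S S' : ideal_t le -> Prop) x :
  (forall I, S I -> S' I) -> Generated S x -> Generated S' x.
Proof.
  intros H G; induction G.
  - eapply Generated_in; eauto.
  - apply Generated_bot.
  - apply Generated_join; auto.
  - eapply Generated_down; eauto.
Qed.

Lemma generated_finite (S : ideal_t le -> Prop) y : Generated S y ->
  exists l, (forall I, In I l -> S I) /\ Generated (fun I => In I l) y.
Proof.
  intros G; induction G.
  - exists (I :: nil); split; [intros J [<- | []]; auto |].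
    eapply Generated_in; [left; reflexivity | exact H0].
  - exists nil; split; [intros _ [] | apply Generated_bot].
  - destruct IHG1 as [l1 [H1 K1]], IHG2 as [l2 [H2 K2]].
    exists (l1 ++ l2); split.
    + intros I HI; apply in_app_or in HI; destruct HI; auto.
    + apply Generated_join; eapply generated_mono; eauto; intros; apply in_or_app; auto.
  - destruct IHG as [l [H1 K1]]; exists l; split; auto; eapply Generated_down; eauto.
Qed.

Lemma ideal_poset : is_poset (ideal_le le).
Proof. unfold ideal_le; split; [| split]; auto; intros; apply ideal_eq; split; auto. Qed.

Lemma ideal_gen_lub S : lub (ideal_le le) S (ideal_gen S).
Proof.
  split.
  - intros I SI x Ix; eapply Generated_in; eauto.
  - intros v Hv x; apply generated_least; intros I y SI Iy; apply (Hv I SI); auto.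
Qed.

Definition ideal_meet (I J : ideal_t le) : ideal_t le.
Proof.
  refine (exist _ (fun x => proj1_sig I x /\ proj1_sig J x) _); apply is_ideal_intro.
  - intros x y H [HI HJ]; split; eapply ideal_down_closed; eauto.
  - split; apply ideal_bot.
  - intros x y [HIx HJx] [HIy HJy]; split; apply ideal_join; auto.
Defined.

Lemma ideal_meet_spec I J : is_meet (ideal_le le) I J (ideal_meet I J).
Proof.
  split; [intros K [-> | ->] x [HI HJ]; auto |].
  intros v Hv x Hx; split;
    [apply (Hv _ (or_introl eq_refl)) | apply (Hv _ (or_intror eq_refl))]; auto.
Qed.

Definition ideal_inter (S : ideal_t le -> Prop) : ideal_t le.
Proof.
  refine (exist _ (fun x => forall I, S I -> proj1_sig I x) _); apply is_ideal_intro.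
  - intros x y H Hy I SI; eapply ideal_down_closed; eauto.
  - intros I _; apply ideal_bot.
  - intros x y Hx Hy I SI; apply ideal_join; auto.
Defined.

Lemma ideal_inter_spec S : glb (ideal_le le) S (ideal_inter S).
Proof.
  split; [intros I SI x Hx; apply Hx; auto |].
  intros v Hv x Hx I SI; apply (Hv I SI); auto.
Qed.

Definition down (a : T) : ideal_t le.
Proof.
  refine (exist _ (fun x => le x a) _); apply is_ideal_intro.
  - intros; eapply le_trans; eauto.
  - apply bot_le.
  - intros; apply join_lub; auto.
Defined.

Definition ideal_imp (I J : ideal_t le) : ideal_t le.
Proof.
  refine (exist _ (fun x => forall y, proj1_sig I y -> proj1_sig J (meet le x y)) _).
  apply is_ideal_intro.
  - intros x x' H Hx' y Iy; eapply ideal_down_closed; [| apply (Hx' y Iy)].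
    apply meet_mono; [exact H | apply le_refl].
  - intros y _; rewrite bot_meet; apply ideal_bot.
  - intros x x' Hx Hx' y Iy; rewrite meet_join_distr_r; apply ideal_join; auto.
Defined.

#[export] Instance ideal_complete_lattice : CompleteLattice (ideal_le le).
Proof.
  split; [apply ideal_poset | split].
  - intros S; exists (ideal_gen S); apply ideal_gen_lub.
  - intros I J; exists (ideal_meet I J); apply ideal_meet_spec.
Qed.

Lemma sup_ideal_eq S : sup (ideal_le le) S = ideal_gen S.
Proof. symmetry; apply lub_eq_sup, ideal_gen_lub. Qed.
Lemma meet_ideal_eq I J : meet (ideal_le le) I J = ideal_meet I J.
Proof. symmetry; apply is_meet_eq, ideal_meet_spec. Qed.
Lemma inf_ideal_eq S : inf (ideal_le le) S = ideal_inter S.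
Proof. symmetry; apply glb_eq_inf, ideal_inter_spec. Qed.
Lemma bot_ideal_eq : bot (ideal_le le) = down (bot le).
Proof.
  symmetry; apply is_bot_eq; intros I x Hx; simpl in Hx.
  eapply ideal_down_closed; [exact Hx | apply ideal_bot].
Qed.
Lemma top_ideal_eq : top (ideal_le le) = down (top le).
Proof. symmetry; apply is_top_eq; intros I x Hx; simpl; apply le_top. Qed.

Lemma generated_meet (S : ideal_t le -> Prop) (I : ideal_t le) z :
  Generated S z -> forall x, proj1_sig I x ->
  Generated (fun y => exists t, S t /\ y = ideal_meet I t) (meet le x z).
Proof.
  intros G; induction G; intros w Iw.
  - eapply Generated_in; [exists I0; split; eauto |]; simpl; split.
    + eapply ideal_down_closed; [apply meet_le_l | exact Iw].
    + eapply ideal_down_closed; [apply meet_le_r | exact H0].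
  - rewrite meet_bot; apply Generated_bot.
  - rewrite meet_join_distr; apply Generated_join; auto.
  - eapply Generated_down; [| apply (IHG w Iw)]; apply meet_mono; [apply le_refl | exact H].
Qed.

Lemma ideal_meet_gen I S :
  ideal_meet I (ideal_gen S) = ideal_gen (fun y => exists t, S t /\ y = ideal_meet I t).
Proof.
  apply ideal_eq; intros x; simpl; split.
  - intros [Ix Gx]; rewrite <- (meet_idem x); apply generated_meet; auto.
  - apply (generated_least _ (ideal_meet I (ideal_gen S))).
    intros J y [t [St ->]] [Iy ty]; simpl; split; auto; eapply Generated_in; eauto.
Qed.

#[export] Instance ideal_frame_distributive : FrameDistributive (ideal_le le).
Proof.
  intros I S s m Hs Hm.
  rewrite (lub_eq_sup _ _ Hs) in Hm; rewrite (is_meet_eq _ _ _ Hm), sup_ideal_eq, meet_ideal_eq.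
  replace (fun y => exists t, S t /\ is_meet (ideal_le le) I t y)
    with (fun y => exists t, S t /\ y = ideal_meet I t).
  - rewrite ideal_meet_gen; apply ideal_gen_lub.
  - apply pred_ext; intros y; split; intros [t [St Ht]]; exists t; split; auto.
    + subst; apply ideal_meet_spec.
    + rewrite <- meet_ideal_eq; apply is_meet_eq; auto.
Qed.

Lemma imp_ideal_eq (I J : ideal_t le) : imp (ideal_le le) I J = ideal_imp I J.
Proof.
  apply le_antisym.
  - intros x Hx y Iy; simpl.
    assert (Hm : proj1_sig (meet (ideal_le le) (imp (ideal_le le) I J) I) (meet le x y)).
    { rewrite meet_ideal_eq; simpl; split.
      - eapply ideal_down_closed; [apply meet_le_l | exact Hx].
      - eapply ideal_down_closed; [apply meet_le_r | exact Iy]. }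
    exact (proj1 (imp_spec _ I J) (le_refl _) _ Hm).
  - apply imp_spec; rewrite meet_ideal_eq; intros x [Hx Ix]; simpl in Hx.
    rewrite <- (meet_idem x); apply Hx; auto.
Qed.

End IdealFrame.

Section PrincipalIdeals.
Context {T : Type} {le : T -> T -> Prop} {C : CompleteLattice le} {D : FrameDistributive le}.

Definition ideal_sup (I : ideal_t le) : T := sup le (proj1_sig I).

Lemma le_ideal_sup (I : ideal_t le) x : proj1_sig I x -> le x (ideal_sup I).
Proof. apply sup_ub. Qed.
Lemma ideal_sup_le_iff I a : le (ideal_sup I) a <-> ideal_le le I (down a).
Proof.
  split.
  - intros H x Ix; simpl; eapply le_trans; [apply le_ideal_sup; exact Ix | exact H].
  - intros H; apply sup_least; intros x Ix; apply (H x Ix).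
Qed.
Lemma ideal_sup_down a : ideal_sup (down a) = a.
Proof.
  apply le_antisym; [apply ideal_sup_le_iff; intros x; auto |].
  apply le_ideal_sup; simpl; apply le_refl.
Qed.
Lemma down_le_iff a b : ideal_le le (down a) (down b) <-> le a b.
Proof.
  split; [intros H; exact (H a (le_refl a)) |].
  intros H x Hx; simpl in *; eapply le_trans; eauto.
Qed.
Lemma ideal_sup_mono I J : ideal_le le I J -> le (ideal_sup I) (ideal_sup J).
Proof. intros H; apply sup_mono; auto. Qed.

Lemma ideal_sup_sup S : ideal_sup (sup (ideal_le le) S) = sup le (image ideal_sup S).
Proof.
  apply le_antisym.
  - apply ideal_sup_le_iff, sup_least; intros I SI.
    apply ideal_sup_le_iff, sup_ub; exists I; auto.
  - apply sup_least; intros y [I [SI ->]]; apply ideal_sup_mono, sup_ub; auto.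
Qed.
Lemma ideal_sup_join I J : ideal_sup (join (ideal_le le) I J) = join le (ideal_sup I) (ideal_sup J).
Proof. unfold join at 1; rewrite ideal_sup_sup, image_pair; reflexivity. Qed.
Lemma ideal_sup_meet I J : ideal_sup (meet (ideal_le le) I J) = meet le (ideal_sup I) (ideal_sup J).
Proof.
  apply le_antisym; [apply meet_glb; apply ideal_sup_mono; [apply meet_le_l | apply meet_le_r] |].
  rewrite meet_ideal_eq; unfold ideal_sup at 2; rewrite meet_sup_distr.
  apply sup_least; intros y [t [Jt ->]].
  rewrite meet_comm; unfold ideal_sup at 1; rewrite meet_sup_distr.
  apply sup_least; intros z [u [Iu ->]].
  apply le_ideal_sup; simpl; split.
  - eapply ideal_down_closed; [apply meet_le_r | exact Iu].
  - eapply ideal_down_closed; [apply meet_le_l | exact Jt].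
Qed.
Lemma ideal_sup_bot : ideal_sup (bot (ideal_le le)) = bot le.
Proof. rewrite bot_ideal_eq; apply ideal_sup_down. Qed.

Lemma down_join a b : join (ideal_le le) (down a) (down b) = down (join le a b).
Proof.
  apply le_antisym.
  - apply join_lub; apply down_le_iff; [apply join_le_l | apply join_le_r].
  - intros x Hx; simpl in Hx; eapply ideal_down_closed; [exact Hx |].
    apply ideal_join;
      [exact (join_le_l (down a) (down b) a (le_refl a))
      | exact (join_le_r (down a) (down b) b (le_refl b))].
Qed.
Lemma down_meet a b : meet (ideal_le le) (down a) (down b) = down (meet le a b).
Proof. rewrite meet_ideal_eq; apply ideal_eq; intros x; simpl; rewrite le_meet_iff; tauto. Qed.

Lemma neg_ideal I : neg (ideal_le le) I = down (neg le (ideal_sup I)).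
Proof.
  apply le_antisym.
  - intros w Hw; simpl; apply neg_spec; unfold ideal_sup; rewrite meet_sup_distr.
    apply le_bot_eq, sup_least; intros y [x [Ix ->]].
    assert (Hwx : proj1_sig (meet (ideal_le le) (neg (ideal_le le) I) I) (meet le w x)).
    { rewrite meet_ideal_eq; simpl; split.
      - eapply ideal_down_closed; [apply meet_le_l | exact Hw].
      - eapply ideal_down_closed; [apply meet_le_r | exact Ix]. }
    rewrite meet_neg_l, bot_ideal_eq in Hwx; exact Hwx.
  - apply neg_spec, le_bot_eq; rewrite bot_ideal_eq, meet_ideal_eq.
    intros x [Hx Ix]; simpl in *.
    rewrite <- (meet_neg_l (ideal_sup I)); apply meet_glb; auto; apply le_ideal_sup; auto.
Qed.

Lemma compact_down a : compact (ideal_le le) (down a).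
Proof.
  apply compact_sup_iff; intros S H; rewrite sup_ideal_eq in H.
  destruct (generated_finite S a (H a (le_refl a))) as [l [Hl G]].
  exists l; split; auto.
  rewrite sup_ideal_eq; intros x Hx; simpl in *; eapply Generated_down; eauto.
Qed.

Lemma principal_cover_bounded (I : ideal_t le) l :
  (forall J, In J l -> exists x, proj1_sig I x /\ J = down x) ->
  exists m, proj1_sig I m /\ ideal_le le (sup (ideal_le le) (fun J => In J l)) (down m).
Proof.
  induction l as [|J l IH]; intros H.
  - exists (bot le); split; [apply ideal_bot |].
    rewrite sup_nil; apply bot_le.
  - destruct IH as [m [Im Hm]]; [intros; apply H; right; auto |].
    destruct (H J (or_introl eq_refl)) as [x [Ix ->]].
    exists (join le x m); split; [apply ideal_join; auto |].
    rewrite sup_cons, <- down_join; apply join_mono; auto; apply le_refl.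
Qed.

Lemma compact_ideal_eq_down (I : ideal_t le) : compact (ideal_le le) I -> I = down (ideal_sup I).
Proof.
  intros HI; rewrite compact_sup_iff in HI.
  destruct (HI (fun J => exists x, proj1_sig I x /\ J = down x)) as [l [Hl HIl]].
  { rewrite sup_ideal_eq; intros x Ix; simpl.
    eapply Generated_in; [exists x; split; eauto | simpl; apply le_refl]. }
  destruct (principal_cover_bounded I l Hl) as [m [Im Hm]].
  assert (E : I = down m).
  { apply le_antisym; [eapply le_trans; eauto |].
    intros x Hx; simpl in Hx; eapply ideal_down_closed; eauto. }
  rewrite E at 2; rewrite ideal_sup_down; exact E.
Qed.

Lemma ideal_coherent : coherent (ideal_le le).
Proof.
  apply coherent_intro.
  - intros I J HI HJ.
    rewrite (compact_ideal_eq_down I HI), (compact_ideal_eq_down J HJ), down_meet.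
    apply compact_down.
  - rewrite top_ideal_eq; apply compact_down.
  - intros I x Ix; rewrite sup_ideal_eq; simpl.
    apply (Generated_in _ (down x) x); [| simpl; apply le_refl].
    split; [apply compact_down | intros y Hy; exact (ideal_down_closed I y x Hy Ix)].
Qed.

Section Boolean.
Hypothesis Hbool : forall x, compl le x.

Lemma ideal_regular : regular (ideal_le le).
Proof.
  apply regular_intro; intros I x Ix; rewrite sup_ideal_eq; simpl.
  apply (Generated_in _ (down x) x); [| simpl; apply le_refl].
  assert (Hx : ideal_le le (down x) I) by (intros y Hy; exact (ideal_down_closed I y x Hy Ix)).
  apply top_le_eq; rewrite neg_ideal, ideal_sup_down.
  eapply le_trans; [| apply (join_mono _ _ _ _ (le_refl _) Hx)].
  rewrite down_join, join_comm, (Hbool x : join le x (neg le x) = top le), top_ideal_eq.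
  apply le_refl.
Qed.

Lemma ideal_ext_disconnected : extremally_disconnected (ideal_le le).
Proof.
  apply ext_disconnected_intro; intros I; unfold compl.
  rewrite !neg_ideal, ideal_sup_down, down_join, top_ideal_eq.
  rewrite (Hbool (neg le (ideal_sup I)) : join le _ (neg le _) = top le); reflexivity.
Qed.

End Boolean.
End PrincipalIdeals.

Section IdealValuation.
Context {T : Type} {le : T -> T -> Prop} {C : CompleteLattice le} {D : FrameDistributive le}
  (a : T) (mu : T -> R) (Hmu : faithful_cv_below le a mu).

Definition ideal_valuation (J : ideal_t le) : R := mu (meet le a (ideal_sup J)).

Lemma meet_sup_image {A} (f : A -> T) S :
  meet le a (sup le (image f S)) = sup le (image (fun J => meet le a (f J)) S).
Proof.
  rewrite meet_sup_distr; f_equal; apply pred_ext; intros y; split.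
  - intros [t [[J [SJ ->]] ->]]; exists J; auto.
  - intros [J [SJ ->]]; exists (f J); split; [exists J |]; auto.
Qed.

Lemma ideal_valuation_continuous : continuous_valuation (ideal_le le) ideal_valuation.
Proof.
  destruct Hmu as [Hge0 [Hbot [Hmod [Hmono [Hcont _]]]]]; unfold ideal_valuation.
  split; [| split; [| split; [| split]]].
  - intros J; apply Hge0, meet_le_l.
  - intros B HB; rewrite (is_bot_eq _ HB), ideal_sup_bot, meet_bot; apply Hbot, is_bot_bot.
  - intros J K L M HL HM.
    rewrite (is_join_eq _ _ _ HL), (is_meet_eq _ _ _ HM), ideal_sup_join, ideal_sup_meet.
    rewrite meet_join_distr, meet_meet_distr.
    apply Hmod; try apply meet_le_l; [apply join_spec | apply meet_spec].
  - intros J K HJK; apply Hmono; try apply meet_le_l.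
    apply meet_mono; [apply le_refl | apply ideal_sup_mono; auto].
  - intros S U HS HU; rewrite (lub_eq_sup _ _ HU), ideal_sup_sup, meet_sup_image.
    rewrite <- (values_image (fun J => meet le a (ideal_sup J))).
    apply Hcont; [intros s [J [_ ->]]; apply meet_le_l | | apply sup_spec].
    apply (directed_image (ideal_le le)); auto.
    intros J K HJK; apply meet_mono; [apply le_refl | apply ideal_sup_mono; auto].
Qed.

Lemma ideal_valuation_normal :
  (forall x, compl le x) -> normal_valuation (ideal_le le) ideal_valuation.
Proof.
  intros Hbool J N NN HN HNN; unfold ideal_valuation.
  rewrite (is_neg_eq _ _ HNN), (is_neg_eq _ _ HN), !neg_ideal, !ideal_sup_down, compl_neg_neg; auto.
Qed.

End IdealValuation.

Lemma localizable_faithful_part {T} {le : T -> T -> Prop} {C : CompleteLattice le}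
  {D : FrameDistributive le} x :
  localizable le -> x <> bot le ->
  exists a mu, faithful_cv_below le a mu /\ meet le a x <> bot le.
Proof.
  intros [_ Hloc] Hx; apply NNPP; intros Hnone; apply Hx.
  assert (Htop : le (top le) (neg le x)).
  { apply (proj2 (Hloc (top le) is_top_top)); intros a [mu Hmu].
    apply neg_spec, NNPP; intros Hne; apply Hnone; exists a, mu; split; auto. }
  apply le_bot_eq; rewrite <- (meet_neg_r x); apply meet_glb; [apply le_refl |].
  eapply le_trans; [apply le_top | exact Htop].
Qed.

Lemma nonzero_ideal_element {T} {le : T -> T -> Prop} {C : CompleteLattice le} (I : ideal_t le) :
  ~ is_bot (ideal_le le) I -> exists x, proj1_sig I x /\ x <> bot le.
Proof.
  intros HI; apply NNPP; intros Hn; apply HI; intros J x Ix.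
  replace x with (bot le); [apply ideal_bot |].
  apply NNPP; intros Hne; apply Hn; exists x; auto.
Qed.

Theorem ideal_hyperstonean (T : Type) (le : T -> T -> Prop) :
  localizable le -> hyperstonean (ideal_le le).
Proof.
  intros Hloc; pose proof (proj1 Hloc) as HA.
  pose proof (is_cba_complete_lattice HA); pose proof (cba_frame_distributive HA).
  pose proof (cba_compl HA) as Hbool.
  split.
  - split; [apply is_frame_intro; typeclasses eauto |].
    split; [apply ideal_coherent |].
    split; [apply ideal_regular | apply ideal_ext_disconnected]; auto.
  - intros I HI.
    destruct (nonzero_ideal_element I HI) as [x [Ix Hx]].
    destruct (localizable_faithful_part x Hloc Hx) as [a [mu [Hmu Hax]]].
    exists (ideal_valuation a mu); split; [apply ideal_valuation_continuous; auto |].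
    split; [apply ideal_valuation_normal; auto |].
    intros Hnull; apply Hax, is_bot_eq.
    destruct Hmu as [Hge0 [_ [_ [Hmono [_ Hfaithful]]]]].
    apply Hfaithful; [apply meet_le_l |].
    assert (Hle : mu (meet le a x) <= ideal_valuation a mu I).
    { apply Hmono; try apply meet_le_l.
      apply meet_mono; [apply le_refl | apply le_ideal_sup; auto]. }
    pose proof (Hge0 _ (meet_le_l a x)); lra.
Qed.

Theorem copen_ideal_iso (T : Type) (le : T -> T -> Prop) : localizable le ->
  exists eps : T -> copen_t (ideal_le le),
    (forall a b, proj1_sig (proj1_sig (eps a)) b <-> le b a) /\
    order_iso le (copen_le (ideal_le le)) eps.
Proof.
  intros [HA _].
  pose proof (is_cba_complete_lattice HA); pose proof (cba_frame_distributive HA).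
  exists (fun a => exist _ (down a) (compact_down a)); split; [intros; simpl; tauto |].
  split; [| split].
  - intros y; exists (ideal_sup (proj1_sig y)); apply copen_eq; simpl.
    symmetry; apply compact_ideal_eq_down, proj2_sig.
  - intros a b E; apply (f_equal (@proj1_sig _ _)) in E; simpl in E.
    apply le_antisym; apply down_le_iff; rewrite E; intros x; auto.
  - intros a b; unfold copen_le; simpl; rewrite down_le_iff; tauto.
Qed.

(** * Supremum-preserving Boolean homomorphisms *)

Lemma sup_bool_hom_frame_hom {A B} (leA : A -> A -> Prop) (leB : B -> B -> Prop) (g : A -> B) :
  sup_bool_hom leA leB g -> frame_hom leA leB g.
Proof. intros [Hsup [Hmeet [Htop _]]]; split; auto. Qed.

Lemma inf_eq_neg_sup_neg {T} {le : T -> T -> Prop} {C : CompleteLattice le}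
  {D : FrameDistributive le} (Hbool : forall x, compl le x) S :
  inf le S = neg le (sup le (image (neg le) S)).
Proof.
  apply le_antisym.
  - apply neg_spec; rewrite meet_sup_distr; apply le_bot_eq, sup_least.
    intros y [t [[s [Ss ->]] ->]]; rewrite meet_neg_le; [apply le_refl | apply inf_lb; auto].
  - apply inf_greatest; intros s Ss; rewrite <- (compl_neg_neg s (Hbool s)).
    apply neg_anti, sup_ub; exists s; auto.
Qed.

Section BooleanHom.
Context {TA TB : Type} {leA : TA -> TA -> Prop} {leB : TB -> TB -> Prop}
  {CA : CompleteLattice leA} {DA : FrameDistributive leA}
  {CB : CompleteLattice leB} {DB : FrameDistributive leB}
  (HboolA : forall x, compl leA x) (HboolB : forall x, compl leB x)
  (g : TA -> TB) (Hg : sup_bool_hom leA leB g).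

Let Hg_frame : frame_hom leA leB g := sup_bool_hom_frame_hom leA leB g Hg.

Lemma sup_bool_hom_neg x : g (neg leA x) = neg leB (g x).
Proof.
  destruct (proj2 (proj2 (proj2 Hg)) x (neg leA x)) as [Hjoin Hmeet].
  - intros t Ht; rewrite (is_top_eq _ Ht), <- (HboolA x); apply join_spec.
  - intros b Hb; rewrite (is_bot_eq _ Hb), <- (meet_neg_r x); apply meet_spec.
  - apply complement_eq_neg.
    + symmetry; apply is_meet_eq, Hmeet, is_bot_bot.
    + symmetry; apply is_join_eq, Hjoin, is_top_top.
Qed.

Lemma sup_bool_hom_inf S : g (inf leA S) = inf leB (image g S).
Proof.
  rewrite (inf_eq_neg_sup_neg HboolA), sup_bool_hom_neg, (frame_hom_sup g Hg_frame),
    (inf_eq_neg_sup_neg HboolB).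
  do 2 f_equal; apply pred_ext; intros y; split.
  - intros [x [[s [Ss ->]] ->]]; exists (g s); split; [exists s; auto | apply sup_bool_hom_neg].
  - intros [x [[s [Ss ->]] ->]]; exists (neg leA s); split; [exists s; auto |].
    symmetry; apply sup_bool_hom_neg.
Qed.

(* [g] preserves all meets, so it has a left adjoint. *)
Definition left_adjoint (b : TB) : TA := inf leA (fun a => leB b (g a)).

Lemma left_adjoint_spec b a : leB b (g a) <-> leA (left_adjoint b) a.
Proof.
  split; [intros; apply inf_lb; auto |].
  intros H; eapply le_trans; [| apply (frame_hom_mono g Hg_frame _ _ H)].
  unfold left_adjoint; rewrite sup_bool_hom_inf.
  apply inf_greatest; intros y [x [Hx ->]]; auto.
Qed.

Lemma le_g_left_adjoint b : leB b (g (left_adjoint b)).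
Proof. apply left_adjoint_spec, le_refl. Qed.

Lemma left_adjoint_mono b b' : leB b b' -> leA (left_adjoint b) (left_adjoint b').
Proof. intros H; apply left_adjoint_spec; eapply le_trans; [exact H | apply le_g_left_adjoint]. Qed.

Lemma left_adjoint_join b b' :
  left_adjoint (join leB b b') = join leA (left_adjoint b) (left_adjoint b').
Proof.
  apply le_antisym.
  - apply left_adjoint_spec; rewrite (frame_hom_join g Hg_frame).
    apply join_mono; apply le_g_left_adjoint.
  - apply join_lub; apply left_adjoint_mono; [apply join_le_l | apply join_le_r].
Qed.

(* Frobenius reciprocity: split [b] along [g a] and its complement [g (neg a)]. *)
Lemma left_adjoint_frobenius b a :
  left_adjoint (meet leB b (g a)) = meet leA (left_adjoint b) a.
Proof.
  apply le_antisym.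
  - apply meet_glb; [apply left_adjoint_mono, meet_le_l | apply left_adjoint_spec, meet_le_r].
  - assert (Hsplit : b = join leB (meet leB b (g a)) (meet leB b (g (neg leA a)))).
    { rewrite <- meet_join_distr, <- (frame_hom_join g Hg_frame),
        (HboolA a : join leA a (neg leA a) = top leA), (frame_hom_top g Hg_frame).
      symmetry; apply meet_top. }
    assert (Hb : leA (left_adjoint b) (join leA (left_adjoint (meet leB b (g a))) (neg leA a))).
    { rewrite Hsplit at 1; rewrite left_adjoint_join.
      apply join_mono; [apply le_refl | apply left_adjoint_spec, meet_le_r]. }
    eapply le_trans; [apply meet_mono; [exact Hb | apply le_refl] |].
    rewrite meet_join_distr_r, meet_neg_l, join_bot; apply meet_le_l.
Qed.

Definition ideal_image (I : ideal_t leA) : ideal_t leB.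
Proof.
  refine (exist _ (fun b => exists a, proj1_sig I a /\ leB b (g a)) _); apply is_ideal_intro.
  - intros x y H [a [Ia Ha]]; exists a; split; auto; eapply le_trans; eauto.
  - exists (bot leA); split; [apply ideal_bot | apply bot_le].
  - intros x y [a [Ia Ha]] [a' [Ia' Ha']]; exists (join leA a a').
    split; [apply ideal_join; auto |].
    rewrite (frame_hom_join g Hg_frame); apply join_mono; auto.
Defined.

Lemma ideal_image_mem I b : proj1_sig (ideal_image I) b <-> proj1_sig I (left_adjoint b).
Proof.
  simpl; split.
  - intros [a [Ia Ha]]; eapply ideal_down_closed; [apply left_adjoint_spec; exact Ha | exact Ia].
  - intros H; exists (left_adjoint b); split; [auto | apply le_g_left_adjoint].
Qed.

Lemma generated_image S a :
  Generated S a -> forall b, leB b (g a) -> Generated (image ideal_image S) b.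
Proof.
  intros G; induction G; intros b Hb.
  - eapply Generated_in; [exists I; split; eauto | exists x; auto].
  - rewrite (frame_hom_bot g Hg_frame) in Hb.
    eapply Generated_down; [exact Hb | apply Generated_bot].
  - rewrite (frame_hom_join g Hg_frame) in Hb; rewrite <- (meet_eq_l _ _ Hb), meet_join_distr.
    apply Generated_join; [apply IHG1 | apply IHG2]; apply meet_le_r.
  - apply IHG; eapply le_trans; [exact Hb | apply (frame_hom_mono g Hg_frame); auto].
Qed.

Lemma ideal_image_gen S : ideal_image (ideal_gen S) = ideal_gen (image ideal_image S).
Proof.
  apply ideal_eq; intros b; split.
  - intros [a [Ga Hba]]; eapply generated_image; eauto.
  - apply (generated_least _ (ideal_image (ideal_gen S))).
    intros J y [I [SI ->]] [a [Ia Hya]]; exists a; split; auto; eapply Generated_in; eauto.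
Qed.

Lemma ideal_image_meet I J :
  ideal_image (ideal_meet I J) = ideal_meet (ideal_image I) (ideal_image J).
Proof.
  apply ideal_eq; intros b.
  transitivity (proj1_sig (ideal_image I) b /\ proj1_sig (ideal_image J) b); [| reflexivity].
  rewrite !ideal_image_mem; simpl; tauto.
Qed.

Lemma ideal_image_inter S : ideal_image (ideal_inter S) = ideal_inter (image ideal_image S).
Proof.
  apply ideal_eq; intros b; rewrite ideal_image_mem; simpl; split.
  - intros H J [I [SI ->]]; apply ideal_image_mem, H; auto.
  - intros H I SI; apply ideal_image_mem, H; exists I; auto.
Qed.

Lemma ideal_image_imp I J : ideal_image (ideal_imp I J) = ideal_imp (ideal_image I) (ideal_image J).
Proof.
  apply ideal_eq; intros b; rewrite ideal_image_mem; simpl; split.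
  - intros H y Iy; apply ideal_image_mem in Iy; apply ideal_image_mem.
    eapply ideal_down_closed; [| apply (H _ Iy)].
    rewrite <- left_adjoint_frobenius; apply left_adjoint_mono.
    apply meet_mono; [apply le_refl | apply le_g_left_adjoint].
  - intros H a Ia.
    rewrite <- left_adjoint_frobenius; apply ideal_image_mem, H.
    exists a; split; [auto | apply le_refl].
Qed.

Lemma ideal_image_open : open_frame_hom (ideal_le leA) (ideal_le leB) ideal_image.
Proof.
  split; [split; [| split] | split].
  - intros S u Hu; rewrite (lub_eq_sup _ _ Hu), sup_ideal_eq, ideal_image_gen; apply ideal_gen_lub.
  - intros I J M HM; rewrite (is_meet_eq _ _ _ HM), meet_ideal_eq, ideal_image_meet.
    apply ideal_meet_spec.
  - intros t Ht X b _; rewrite (is_top_eq _ Ht), top_ideal_eq.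
    exists (top leA); split; [simpl; apply le_refl |].
    rewrite (frame_hom_top g Hg_frame); apply le_top.
  - intros S l Hl; rewrite (glb_eq_inf _ _ Hl), inf_ideal_eq, ideal_image_inter.
    apply ideal_inter_spec.
  - intros I J K HK; rewrite (is_imp_eq _ _ _ HK), imp_ideal_eq, ideal_image_imp, <- imp_ideal_eq.
    apply is_imp_imp.
Qed.

End BooleanHom.

Theorem ideal_map (TA TB : Type) (leA : TA -> TA -> Prop) (leB : TB -> TB -> Prop)
  (g : TA -> TB) :
  localizable leA -> localizable leB -> sup_bool_hom leA leB g ->
  exists F : ideal_t leA -> ideal_t leB,
    (forall I b, proj1_sig (F I) b <-> exists a, proj1_sig I a /\ leB b (g a)) /\
    open_frame_hom (ideal_le leA) (ideal_le leB) F.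
Proof.
  intros [HA _] [HB _] Hg.
  pose proof (is_cba_complete_lattice HA); pose proof (cba_frame_distributive HA).
  pose proof (is_cba_complete_lattice HB); pose proof (cba_frame_distributive HB).
  exists (ideal_image g Hg); split; [reflexivity |].
  apply (ideal_image_open (cba_compl HA) (cba_compl HB)).
Qed.

Theorem counit_natural (TA TB : Type) (leA : TA -> TA -> Prop) (leB : TB -> TB -> Prop)
  (g : TA -> TB) :
  localizable leA -> localizable leB -> sup_bool_hom leA leB g ->
  forall a b, (exists a', leA a' a /\ leB b (g a')) <-> leB b (g a).
Proof.
  intros [HA _] [HB _] Hg a b.
  pose proof (is_cba_complete_lattice HA); pose proof (is_cba_complete_lattice HB).
  split; [| intros Hb; exists a; split; [apply le_refl | exact Hb]].
  intros [a' [Ha' Hb]]; eapply le_trans; [exact Hb |].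
  apply (frame_hom_mono g (sup_bool_hom_frame_hom _ _ g Hg)); exact Ha'.
Qed.

Theorem mainTheorem9 :
  (* (1) COpen(H) is localizable for hyperstonean H *)
  (forall (T : Type) (le : T -> T -> Prop),
     hyperstonean le -> localizable (copen_le le)) /\
  (* (2) Ideal(A) is hyperstonean for localizable A *)
  (forall (T : Type) (le : T -> T -> Prop),
     localizable le -> hyperstonean (ideal_le le)) /\
  (* (3) unit: Ideal(COpen H) -> H, J |-> join J, is a frame isomorphism *)
  (forall (T : Type) (le : T -> T -> Prop), hyperstonean le ->
     exists eta : ideal_t (copen_le le) -> T,
       (forall J, lub le (fun x => exists c, proj1_sig J c /\ x = proj1_sig c) (eta J)) /\
       order_iso (ideal_le (copen_le le)) le eta) /\
  (* (4) counit: A -> COpen(Ideal A), a |-> principal ideal, is an isomorphism *)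
  (forall (T : Type) (le : T -> T -> Prop), localizable le ->
     exists eps : T -> copen_t (ideal_le le),
       (forall a b, proj1_sig (proj1_sig (eps a)) b <-> le b a) /\
       order_iso le (copen_le (ideal_le le)) eps) /\
  (* (5) COpen on morphisms: open locale maps H -> K (frame homs f : K -> H)
         restrict to supremum-preserving Boolean homs COpen K -> COpen H *)
  (forall (TH TK : Type) (leH : TH -> TH -> Prop) (leK : TK -> TK -> Prop)
          (f : TK -> TH),
     hyperstonean leH -> hyperstonean leK -> open_frame_hom leK leH f ->
     exists g : copen_t leK -> copen_t leH,
       (forall c, proj1_sig (g c) = f (proj1_sig c)) /\
       sup_bool_hom (copen_le leK) (copen_le leH) g) /\
  (* (6) Ideal on morphisms: a supremum-preserving Boolean hom g : A -> B gives
         the open locale map Ideal B -> Ideal A with frame hom I |-> down(g(I)) *)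
  (forall (TA TB : Type) (leA : TA -> TA -> Prop) (leB : TB -> TB -> Prop)
          (g : TA -> TB),
     localizable leA -> localizable leB -> sup_bool_hom leA leB g ->
     exists F : ideal_t leA -> ideal_t leB,
       (forall I b, proj1_sig (F I) b <-> exists a, proj1_sig I a /\ leB b (g a)) /\
       open_frame_hom (ideal_le leA) (ideal_le leB) F) /\
  (* (7) naturality of the unit: eta_H (Ideal(COpen f) J) = f (eta_K J) *)
  (forall (TH TK : Type) (leH : TH -> TH -> Prop) (leK : TK -> TK -> Prop)
          (f : TK -> TH),
     hyperstonean leH -> hyperstonean leK -> open_frame_hom leK leH f ->
     forall (J : ideal_t (copen_le leK)) (u : TK),
       lub leK (fun x => exists c, proj1_sig J c /\ x = proj1_sig c) u ->
       lub leH (fun x => exists c : copen_t leH,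
                   (exists d, proj1_sig J d /\ leH (proj1_sig c) (f (proj1_sig d))) /\
                   x = proj1_sig c) (f u)) /\
  (* (8) naturality of the counit: Ideal(g) (down a) = down (g a) *)
  (forall (TA TB : Type) (leA : TA -> TA -> Prop) (leB : TB -> TB -> Prop)
          (g : TA -> TB),
     localizable leA -> localizable leB -> sup_bool_hom leA leB g ->
     forall a b, (exists a', leA a' a /\ leB b (g a')) <-> leB b (g a)).
Proof.
  split; [exact copen_localizable |].
  split; [exact ideal_hyperstonean |].
  split; [exact ideal_copen_iso |].
  split; [exact copen_ideal_iso |].
  split; [exact copen_map |].
  split; [exact ideal_map |].
  split; [exact unit_natural |].
  exact counit_natural.
Qed.
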